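(* In the semi-discrete wave setting described in the context, assume that the reference state $u$ satisfies the discrete non-degeneracy condition: for all $t>0$ and all $j\in\{1,\dots,N-1\}$, $\frac12u_{(2,j)}(t)-2u_{(1,j)}(t)\neq0$. Let $Z_d=U_0(T)=(u(T),\partial_tu(T))$. Then there exist a neighborhood $\mathcal{V}(0)\subset C([0,T];W_h)$ of $0$ and a neighborhood $\mathcal{V}(Z_d)\subset\mathcal{F}(\mathring\Omega_h)^2$ of $Z_d$ such that for every $Z\in\mathcal{V}(Z_d)$ there exists $\varphi\in\mathcal{V}(0)$ with $U_\varphi(T)=Z$.
   Context: Let $h>0$, integers $M,N\ge2$, grid $\Omega_h=\{(ih,jh):0\le i\le M,0\le j\le N\}$ with nodes indexed $(i,j)$, interior $\mathring\Omega_h=\{1\le i\le M-1,1\le j\le N-1\}$, $\Gamma^1=\{(1,j):1\le j\le N-1\}$; $\mathcal{F}(\mathring\Omega_h)$ is the space of real functions on $\mathring\Omega_h$, extended by $0$ on boundary nodes. For $j=1,\dots,N-1$, $V_j$ equals $(1,0)$ at boundary node $(0,j)$ and $0$ elsewhere, $W_h=\mathrm{span}(V_j)$. Admissible perturbations are $\varphi(t)=\sum_{j=1}^{N-1}h\lambda_j(t)V_j$ with $\lambda_j\in W^{1,\infty}(\mathbb{R}^+)\cap C^1(\mathbb{R}^+)$, $\sup_j\|\lambda_j\|_\infty<1/2$ and $\|\partial_t\lambda_j\|_\infty<1$. $A(\varphi)$ is the operator $[A(\varphi)\phi]_{(i,j)}=h^{-2}(4\phi_{(i,j)}-\phi_{(i+1,j)}-\phi_{(i-1,j)}-\phi_{(i,j+1)}-\phi_{(i,j-1)})$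 for $(i,j)\notin\Gamma^1$ and $[A(\varphi)\phi]_{(1,j)}=h^{-2}\big(2(1+\frac{1}{1+\lambda_j(t)})\phi_{(1,j)}-\frac{2}{2+\lambda_j(t)}\phi_{(2,j)}-\phi_{(1,j+1)}-\phi_{(1,j-1)}\big)$. Given a source $F$ and data $u_0,u_1\in\mathcal{F}(\mathring\Omega_h)$, the perturbed state $u_\varphi$ solves $\partial_t^2u_\varphi+A(\varphi)u_\varphi=F$, $u_\varphi(0)=u_0$, $\partial_tu_\varphi(0)=u_1$, and $U_\varphi=(u_\varphi,\partial_tu_\varphi)$. The reference state is $u=u_{\varphi=0}$ and $U_0=(u,\partial_tu)$. $T>0$ is fixed. *)

From Stdlib Require Import Reals Lra Lia.
From Coquelicot Require Import Coquelicot.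
Open Scope R_scope.

(* Grid functions: values at nodes (i,j); only nodes of the grid matter. *)
Definition grid := nat -> nat -> R.

Definition inner_node (M N i j : nat) : Prop :=
  (1 <= i <= M - 1)%nat /\ (1 <= j <= N - 1)%nat.

Definition interiorb (M N i j : nat) : bool :=
  (Nat.leb 1 i && Nat.leb i (M - 1) && Nat.leb 1 j && Nat.leb j (N - 1))%bool.

Definition ext (M N : nat) (u : grid) : grid :=
  fun i j => if interiorb M N i j then u i j else 0.

(* [A(phi) p]_(i,j), phi = sum_j h lam_j V_j ; lam : nat -> R gives lam_j (at a fixed time);
   p is the (zero-extended) grid function *)
Definition Aop (h : R) (lam : nat -> R) (p : grid) : grid :=
  fun i j =>
    if Nat.eqb i 1 then
      / (h ^ 2) * (2 * (1 + 1 / (1 + lam j)) * p 1%nat j - 2 / (2 + lam j) * p 2%nat j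
                   - p 1%nat (j + 1)%nat - p 1%nat (j - 1)%nat)
    else
      / (h ^ 2) * (4 * p i j - p (i + 1)%nat j - p (i - 1)%nat j
                   - p i (j + 1)%nat - p i (j - 1)%nat).

Definition solves_on (D : R -> Prop) (M N : nat) (h : R) (F : R -> grid)
    (lam : R -> nat -> R) (u0 u1 : grid) (w dw : R -> grid) : Prop :=
  forall i j, inner_node M N i j ->
    w 0 i j = u0 i j /\ dw 0 i j = u1 i j /\
    forall t, D t ->
      exists a : R,
        is_derive (fun s => w s i j) t (dw t i j) /\
        is_derive (fun s => dw s i j) t a /\
        a + Aop h (lam t) (ext M N (w t)) i j = F t i j.

Definition admissible (N : nat) (lam : R -> nat -> R) : Prop :=
  (exists c, c < / 2 /\
     forall j, (1 <= j <= N - 1)%nat -> forall t, 0 <= t -> Rabs (lam t j) <= c) /\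
  (forall j, (1 <= j <= N - 1)%nat ->
     exists dl : R -> R,
       (forall t, 0 <= t -> is_derive (fun s => lam s j) t (dl t)) /\
       continuous_on (fun t => 0 <= t) dl /\
       (exists c, c < 1 /\ forall t, 0 <= t -> Rabs (dl t) <= c)).

(* V0 is a neighborhood of 0 in C([0,T]; W_h); an element of W_h is represented by its
   coordinates (g_j)_{j=1..N-1} in the basis (V_j), sup norm over [0,T] and j. *)
Definition nbhd0 (N : nat) (T : R) (V0 : (R -> nat -> R) -> Prop) : Prop :=
  exists eps, 0 < eps /\
    forall g : R -> nat -> R,
      (forall j, (1 <= j <= N - 1)%nat -> continuous_on (fun t => 0 <= t <= T) (fun t => g t j)) ->
      (forall t j, 0 <= t <= T -> (1 <= j <= N - 1)%nat -> Rabs (g t j) < eps) ->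
      V0 g.

Definition nbhdZ (M N : nat) (Zd : grid * grid) (VZ : grid * grid -> Prop) : Prop :=
  exists del, 0 < del /\
    forall Z : grid * grid,
      (forall i j, inner_node M N i j ->
         Rabs (fst Z i j - fst Zd i j) < del /\ Rabs (snd Z i j - snd Zd i j) < del) ->
      VZ Z.

(* The perturbation only enters the equations of the first column, so the controlled state is
   sought as [u + e] with [e] solving the unperturbed scheme on the columns 2, ..., M-1.  Choosing
   [e] on the last interior column as a smooth function of time that vanishes on [0, T/2], the
   equations of the columns M-1, ..., 2 successively determine [e] on the columns to their left,
   and the equation of column 1 determines a fictitious column-0 value [rho].  The jet at [T] of
   that seed is solved for order by order (the dependence is triangular) so that [e(T)] and
   [e'(T)] are the required differences [Z - U_0(T)]; all of [e] is then linear in [Z - U_0(T)].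
   The true first-column equation holds with coefficient [lambda] iff [lambda] is a root of a
   quadratic whose constant term is [2 rho] and whose linear coefficient is close to
   [2 (u_(2,j)/2 - 2 u_(1,j))], which the non-degeneracy condition keeps away from 0; for [Z]
   near [U_0(T)] its small root is C^1 in time, bounded by 1/4 with derivative bounded by 1/2.
   Composing with a C^1 map of [0, +oo) onto [0, T+1) that is the identity on [0, T] makes it
   admissible for all times. *)

From Stdlib Require Import Reals Lra Lia List Classical.
From Coquelicot Require Import Coquelicot.
Import ListNotations.
Open Scope R_scope.

(** * Calculus on the real line *)

Lemma is_derive_plusR (f g : R -> R) x a b : is_derive f x a -> is_derive g x b ->
  is_derive (fun t => f t + g t) x (a + b).
Proof. intros; apply (is_derive_plus f g); auto. Qed.
Lemma is_derive_minusR (f g : R -> R) x a b : is_derive f x a -> is_derive g x b ->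
  is_derive (fun t => f t - g t) x (a - b).
Proof. intros; apply (is_derive_minus f g); auto. Qed.
Lemma is_derive_multR (f g : R -> R) x a b : is_derive f x a -> is_derive g x b ->
  is_derive (fun t => f t * g t) x (a * g x + f x * b).
Proof. intros; apply (is_derive_mult f g); auto. intros; apply Rmult_comm. Qed.
Lemma is_derive_scalR (f : R -> R) x c a : is_derive f x a ->
  is_derive (fun t => c * f t) x (c * a).
Proof. intros; apply is_derive_scal; auto. Qed.
Lemma is_derive_constR (c x : R) : is_derive (fun _ => c) x 0.
Proof. apply (is_derive_const (K:=R_AbsRing) (V:=R_NormedModule) c x). Qed.
Lemma is_derive_idR (x : R) : is_derive (fun t => t) x 1.
Proof. apply (is_derive_id (K:=R_AbsRing) x). Qed.
Lemma is_derive_eq (f g : R -> R) x a b : is_derive f x a -> (forall t, f t = g t) -> a = b ->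
  is_derive g x b.
Proof. intros H E ->. apply (is_derive_ext f g); auto. Qed.
Lemma is_derive_ext_near (f g : R -> R) x a : is_derive f x a ->
  (exists e, 0 < e /\ forall t, Rabs (t - x) < e -> f t = g t) -> is_derive g x a.
Proof.
  intros H [e [He E]]. apply (is_derive_ext_loc f g); auto.
  exists (mkposreal e He). intros y Hy. apply E, Hy.
Qed.
Lemma is_derive_continuous (f : R -> R) x a : is_derive f x a -> continuous f x.
Proof. intros H. apply (ex_derive_continuous (V:=R_NormedModule)). exists a; auto. Qed.
Lemma is_derive_continuity_pt (f : R -> R) x a : is_derive f x a -> continuity_pt f x.
Proof. intros H. apply continuity_pt_filterlim, (is_derive_continuous f x a H). Qed.

Lemma Derive_is_derive (f : R -> R) x l : is_derive f x l -> Derive (fun y : R => f y) x = l.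
Proof. apply is_derive_unique. Qed.

Lemma is_derive_glue (f f1 f2 : R -> R) a L :
  is_derive f1 a L -> is_derive f2 a L ->
  (forall x, x <= a -> f x = f1 x) -> (forall x, a <= x -> f x = f2 x) ->
  is_derive f a L.
Proof.
  intros H1 H2 E1 E2. apply is_derive_Reals. apply is_derive_Reals in H1, H2.
  intros eps Heps. destruct (H1 eps Heps) as [d1 Hd1], (H2 eps Heps) as [d2 Hd2].
  assert (Hd : 0 < Rmin d1 d2) by (apply Rmin_pos; [apply d1|apply d2]).
  exists (mkposreal _ Hd). intros h Hh0 Hh. simpl in Hh.
  destruct (Rle_dec (a + h) a).
  - rewrite E1, (E1 a) by lra. apply Hd1; auto. eapply Rlt_le_trans; [apply Hh|apply Rmin_l].
  - rewrite E2, (E2 a) by lra. apply Hd2; auto. eapply Rlt_le_trans; [apply Hh|apply Rmin_r].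
Qed.

Lemma continuous_plusR (f g : R -> R) x : continuous f x -> continuous g x ->
  continuous (fun t => f t + g t) x.
Proof. intros; apply (continuous_plus (V:=R_NormedModule) f g); auto. Qed.
Lemma continuous_multR (f g : R -> R) x : continuous f x -> continuous g x ->
  continuous (fun t => f t * g t) x.
Proof. intros; apply (continuous_mult (K:=R_AbsRing) f g); auto. Qed.
Lemma continuous_constR (c x : R) : continuous (fun _ : R => c) x.
Proof. apply (continuous_const (U:=R_UniformSpace) (V:=R_UniformSpace)). Qed.
Lemma continuous_oppR (f : R -> R) x : continuous f x -> continuous (fun t => - f t) x.
Proof.
  intros Hf. apply (continuous_ext (fun t => (-1) * f t)); [intros t; simpl; ring|].
  apply continuous_multR; auto. apply continuous_constR.
Qed.
Lemma continuous_minusR (f g : R -> R) x : continuous f x -> continuous g x ->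
  continuous (fun t => f t - g t) x.
Proof. intros. apply continuous_plusR; auto. apply continuous_oppR; auto. Qed.
Lemma continuous_divR (f g : R -> R) x : continuous f x -> continuous g x -> g x <> 0 ->
  continuous (fun t => f t / g t) x.
Proof. intros. apply continuous_multR; auto. apply continuous_Rinv_comp; auto. Qed.
Lemma continuous_powR (f : R -> R) x n : continuous f x -> continuous (fun t => f t ^ n) x.
Proof. intros H. induction n; simpl. apply continuous_constR. apply continuous_multR; auto. Qed.
Lemma continuous_ext_near (f g : R -> R) x : continuous f x ->
  (exists e, 0 < e /\ forall t, Rabs (t - x) < e -> f t = g t) -> continuous g x.
Proof.
  intros H [e [He E]]. apply (continuous_ext_loc (T:=R_UniformSpace) g f x); auto.
  exists (mkposreal e He). intros y Hy. apply E, Hy.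
Qed.

Ltac continuity_tac :=
  repeat (first [ assumption | apply continuous_constR | apply continuous_plusR
                | apply continuous_minusR | apply continuous_oppR | apply continuous_multR
                | apply continuous_powR
                | apply continuous_divR ]).

Lemma Rabs_le_inv x y : Rabs x <= y -> - y <= x <= y.
Proof. unfold Rabs; destruct Rcase_abs; intros; lra. Qed.

Lemma bounded_on_segment (f : R -> R) a b : a <= b ->
  (forall c, a <= c <= b -> continuity_pt f c) ->
  exists B, forall c, a <= c <= b -> Rabs (f c) <= B.
Proof.
  intros Hab Hc. destruct (continuity_ab_maj (fun x => Rabs (f x)) a b Hab) as [m [Hm _]].
  - intros c Hc'. apply continuity_pt_comp with (f1 := f) (f2 := Rabs); auto.
    apply Rcontinuity_abs.
  - exists (Rabs (f m)). intros c Hc'. apply (Hm c Hc').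
Qed.

Lemma bounded_uniform_fin (f : nat -> R -> R) (P : R -> Prop) n :
  (forall k, (k < n)%nat -> exists B, forall t, P t -> Rabs (f k t) <= B) ->
  exists B, 0 <= B /\ forall k, (k < n)%nat -> forall t, P t -> Rabs (f k t) <= B.
Proof.
  induction n; intros H.
  - exists 0. split; [lra|]. intros; lia.
  - destruct IHn as [B1 [HB1 H1]]; [intros; apply H; lia|].
    destruct (H n) as [B2 H2]; [lia|].
    exists (Rmax B1 B2). split; [eapply Rle_trans; [apply HB1|apply Rmax_l]|].
    intros k Hk t Ht. destruct (Nat.eq_dec k n) as [->|].
    + eapply Rle_trans; [apply H2; auto|apply Rmax_r].
    + eapply Rle_trans; [apply H1; auto; lia|apply Rmax_l].
Qed.

Lemma positive_lower_bound_fin (f : nat -> R -> R) (P : nat -> Prop) (D : R -> Prop) n :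
  (forall k, (k < n)%nat -> P k -> exists m, 0 < m /\ forall t, D t -> m <= f k t) ->
  exists m, 0 < m /\ forall k, (k < n)%nat -> P k -> forall t, D t -> m <= f k t.
Proof.
  induction n; intros H.
  - exists 1. split; [lra|]. intros; lia.
  - destruct IHn as [m1 [Hm1 H1]]; [intros; apply H; auto; lia|].
    destruct (classic (P n)) as [Pn|Pn].
    + destruct (H n ltac:(lia) Pn) as [m2 [Hm2 H2]].
      exists (Rmin m1 m2). split; [apply Rmin_pos; auto|].
      intros k Hk Pk t Ht. destruct (Nat.eq_dec k n) as [->|].
      * eapply Rle_trans; [apply Rmin_r|auto].
      * eapply Rle_trans; [apply Rmin_l|]. apply H1; auto; lia.
    + exists m1. split; auto. intros k Hk Pk t Ht. destruct (Nat.eq_dec k n) as [->|]; [tauto|].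
      apply H1; auto; lia.
Qed.

Ltac ring_R := match goal with |- ?x = ?y => change (@eq R x y) end; ring.

(** * Smooth functions vanishing before a time, with prescribed jets *)

Definition ramp_pow (a : nat) (x : R) : R := if Rle_dec x 0 then 0 else x ^ a.

Lemma ramp_pow_nonpos a x : x <= 0 -> ramp_pow a x = 0.
Proof. unfold ramp_pow; destruct (Rle_dec x 0); lra. Qed.
Lemma ramp_pow_pos a x : 0 < x -> ramp_pow a x = x ^ a.
Proof. unfold ramp_pow; destruct (Rle_dec x 0); lra. Qed.

Lemma is_derive_ramp_pow a x : (2 <= a)%nat ->
  is_derive (ramp_pow a) x (INR a * ramp_pow (a - 1) x).
Proof.
  intros Ha.
  assert (Dpow : forall y, is_derive (fun t => t ^ a) y (INR a * y ^ (a - 1))).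
  { intros y. eapply is_derive_eq; [apply is_derive_pow, is_derive_idR|reflexivity|].
    replace (Init.Nat.pred a) with (a - 1)%nat by lia. ring_R. }
  destruct (Rtotal_order x 0) as [Hx|[->|Hx]].
  - rewrite ramp_pow_nonpos, Rmult_0_r by lra.
    apply is_derive_ext_near with (fun _ => 0); [apply is_derive_constR|].
    exists (- x); split; [lra|]. intros t Ht. apply Rabs_def2 in Ht.
    rewrite ramp_pow_nonpos; lra.
  - rewrite ramp_pow_nonpos, Rmult_0_r by lra.
    apply is_derive_glue with (fun _ => 0) (fun t => t ^ a).
    + apply is_derive_constR.
    + eapply is_derive_eq; [apply Dpow|reflexivity|]. rewrite pow_i by lia. ring_R.
    + intros; apply ramp_pow_nonpos; auto.
    + intros y Hy. destruct (Req_dec y 0) as [->|].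
      * rewrite ramp_pow_nonpos, pow_i by (lra || lia). reflexivity.
      * apply ramp_pow_pos; lra.
  - rewrite ramp_pow_pos by lra.
    apply is_derive_ext_near with (fun t => t ^ a); [apply Dpow|].
    exists x; split; [lra|]. intros t Ht. apply Rabs_def2 in Ht.
    rewrite ramp_pow_pos; lra.
Qed.

(* Finite sums of terms [c * (t - t0)_+^a * (t - tT)^b]; differentiation stays in this class
   while every ramp exponent is at least 2. *)
Section RampPolynomials.
Variables t0 tT : R.

Definition ramp_term := (R * nat * nat)%type.
Definition ramp_term_eval (x : ramp_term) (t : R) : R :=
  let '(c, a, b) := x in c * ramp_pow a (t - t0) * (t - tT) ^ b.
Fixpoint ramp_eval (l : list ramp_term) (t : R) : R :=
  match l with [] => 0 | x :: l' => ramp_term_eval x t + ramp_eval l' t end.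
Definition ramp_term_deriv (x : ramp_term) : list ramp_term :=
  let '(c, a, b) := x in [(c * INR a, (a - 1)%nat, b); (c * INR b, a, (b - 1)%nat)].
Fixpoint ramp_deriv (l : list ramp_term) : list ramp_term :=
  match l with [] => [] | x :: l' => ramp_term_deriv x ++ ramp_deriv l' end.
Definition ramp_deriv_n (n : nat) (l : list ramp_term) := Nat.iter n ramp_deriv l.
Definition ramp_exponent (x : ramp_term) : nat := let '(_, a, _) := x in a.

Lemma ramp_eval_app l1 l2 t : ramp_eval (l1 ++ l2) t = ramp_eval l1 t + ramp_eval l2 t.
Proof. induction l1; simpl; [ring|]. rewrite IHl1; ring. Qed.

Lemma ramp_deriv_app l1 l2 : ramp_deriv (l1 ++ l2) = ramp_deriv l1 ++ ramp_deriv l2.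
Proof. induction l1; simpl; auto. rewrite IHl1, app_assoc; auto. Qed.

Lemma is_derive_ramp_term x t : (2 <= ramp_exponent x)%nat ->
  is_derive (ramp_term_eval x) t (ramp_eval (ramp_term_deriv x) t).
Proof.
  destruct x as [[c a] b]. simpl. intros Ha.
  assert (Hr : is_derive (fun s => ramp_pow a (s - t0)) t (INR a * ramp_pow (a - 1) (t - t0))).
  { eapply is_derive_eq.
    - apply (is_derive_comp (ramp_pow a) (fun s => s - t0)); [apply is_derive_ramp_pow; auto|].
      apply is_derive_minusR; [apply is_derive_idR|apply is_derive_constR].
    - reflexivity.
    - simpl. unfold scal; simpl. unfold mult; simpl. ring_R. }
  assert (Hp : is_derive (fun s => (s - tT) ^ b) t (INR b * (t - tT) ^ (b - 1))).
  { eapply is_derive_eq.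
    - apply is_derive_pow, is_derive_minusR; [apply is_derive_idR|apply is_derive_constR].
    - reflexivity.
    - replace (Init.Nat.pred b) with (b - 1)%nat by lia. ring_R. }
  eapply is_derive_eq; [apply is_derive_multR; [apply is_derive_scalR, Hr|apply Hp]|reflexivity|].
  simpl. ring_R.
Qed.

Lemma is_derive_ramp_eval l t : List.Forall (fun x => (2 <= ramp_exponent x)%nat) l ->
  is_derive (ramp_eval l) t (ramp_eval (ramp_deriv l) t).
Proof.
  induction l as [|x l IH]; intros HF; simpl; [apply is_derive_constR|].
  inversion HF; subst.
  eapply is_derive_eq.
  - exact (is_derive_plusR _ _ _ _ _ (is_derive_ramp_term x t H1) (IH H2)).
  - reflexivity.
  - rewrite ramp_eval_app; reflexivity.
Qed.

Lemma ramp_deriv_exponent l k : List.Forall (fun x => (k <= ramp_exponent x)%nat) l ->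
  List.Forall (fun x => (k - 1 <= ramp_exponent x)%nat) (ramp_deriv l).
Proof.
  induction l as [|x l IH]; intros HF; simpl; auto.
  inversion HF; subst. apply Forall_app; split; auto.
  destruct x as [[c a] b]; simpl in *. repeat constructor; simpl; lia.
Qed.

Lemma ramp_deriv_n_S n l : ramp_deriv_n (S n) l = ramp_deriv_n n (ramp_deriv l).
Proof.
  unfold ramp_deriv_n. induction n; simpl; auto. simpl in IHn. rewrite <- IHn. reflexivity.
Qed.

Lemma ramp_deriv_n_app n l1 l2 :
  ramp_deriv_n n (l1 ++ l2) = ramp_deriv_n n l1 ++ ramp_deriv_n n l2.
Proof.
  revert l1 l2. induction n; intros; simpl; auto.
  unfold ramp_deriv_n in *; simpl. rewrite IHn. apply ramp_deriv_app.
Qed.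

Lemma ramp_deriv_n_pair n x y :
  ramp_deriv_n n [x; y] = ramp_deriv_n n [x] ++ ramp_deriv_n n [y].
Proof. exact (ramp_deriv_n_app n [x] [y]). Qed.

Lemma ramp_deriv_n_exponent n l k : List.Forall (fun x => (k <= ramp_exponent x)%nat) l ->
  List.Forall (fun x => (k - n <= ramp_exponent x)%nat) (ramp_deriv_n n l).
Proof.
  revert k. induction n; intros k H; simpl.
  - eapply Forall_impl; [|apply H]. intros ? Hx; cbv beta in *; lia.
  - unfold ramp_deriv_n; simpl. fold (ramp_deriv_n n l).
    eapply Forall_impl; [|apply (ramp_deriv_exponent _ _ (IHn k H))].
    intros ? Hx; cbv beta in *; lia.
Qed.

Lemma ramp_eval_before l t : t <= t0 -> ramp_eval l t = 0.
Proof.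
  intros Ht. induction l as [|[[c a] b] l IH]; simpl; auto.
  rewrite IH, ramp_pow_nonpos by lra. ring.
Qed.

Lemma ramp_jet_below_order n a b c : (n < b)%nat -> ramp_eval (ramp_deriv_n n [(c, a, b)]) tT = 0.
Proof.
  revert a b c. induction n; intros a b c Hb.
  - simpl. rewrite Rminus_diag, pow_i by lia. ring.
  - rewrite ramp_deriv_n_S. simpl.
    rewrite ramp_deriv_n_pair, ramp_eval_app, !IHn by lia. ring.
Qed.

Lemma ramp_jet_at_order b a c :
  ramp_eval (ramp_deriv_n b [(c, a, b)]) tT = c * INR (Factorial.fact b) * ramp_pow a (tT - t0).
Proof.
  revert a c. induction b; intros a c.
  - simpl. ring.
  - rewrite ramp_deriv_n_S. simpl.
    rewrite ramp_deriv_n_pair, ramp_eval_app, ramp_jet_below_order by lia.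
    replace (b - 0)%nat with b by lia. rewrite IHb.
    change (match b with 0%nat => 1 | S _ => INR b + 1 end) with (INR (S b)).
    rewrite plus_INR, mult_INR, S_INR. ring.
Qed.

End RampPolynomials.

Section JetInterpolation.
Variables t0 tT ia ib : R.
Variable order : nat.
Hypothesis Ht0T : t0 < tT.
Hypothesis HtT : ia <= tT <= ib.

Definition bump_exp := (order + 3)%nat.

Definition bump (p k : nat) (t : R) : R :=
  ramp_eval t0 tT (ramp_deriv_n k [(1, bump_exp, p)]) t.

Lemma is_derive_bump p k t : (k < order)%nat -> is_derive (bump p k) t (bump p (S k) t).
Proof.
  intros Hk. unfold bump.
  change (ramp_deriv_n (S k) [(1, bump_exp, p)])
    with (ramp_deriv (ramp_deriv_n k [(1, bump_exp, p)])).
  apply is_derive_ramp_eval.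
  eapply List.Forall_impl; [|apply (ramp_deriv_n_exponent k _ bump_exp); repeat constructor].
  intros ? Hx; cbv beta in *; unfold bump_exp in *; lia.
Qed.

Lemma bump_before p k t : t <= t0 -> bump p k t = 0.
Proof. intros; apply ramp_eval_before; auto. Qed.

Lemma bump_jet_below p k : (k < p)%nat -> bump p k tT = 0.
Proof. intros; apply ramp_jet_below_order; auto. Qed.

Definition bump_peak (p : nat) := INR (Factorial.fact p) * (tT - t0) ^ bump_exp.

Lemma bump_peak_pos p : 0 < bump_peak p.
Proof.
  unfold bump_peak. apply Rmult_lt_0_compat.
  - apply lt_0_INR, Factorial.lt_O_fact.
  - apply pow_lt; lra.
Qed.

Lemma bump_jet_diag p : bump p p tT = bump_peak p.
Proof. unfold bump, bump_peak. rewrite ramp_jet_at_order, ramp_pow_pos by lra. ring. Qed.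

Lemma bump_bounded p : exists B, 0 <= B /\
  forall k, (k < order)%nat -> forall t, ia <= t <= ib -> Rabs (bump p k t) <= B.
Proof.
  apply bounded_uniform_fin. intros k Hk. apply bounded_on_segment; [lra|].
  intros c _. eapply is_derive_continuity_pt, is_derive_bump; auto.
Qed.

(* [jet_interp J p t k j] is the k-th time derivative of a function whose first p derivatives
   at tT are [J 0 j, ..., J (p-1) j]; each step corrects one derivative with a bump whose lower
   derivatives vanish at tT. *)
Fixpoint jet_interp (J : nat -> nat -> R) (p : nat) : R -> nat -> nat -> R :=
  match p with
  | O => fun _ _ _ => 0
  | S q => fun t k j =>
      jet_interp J q t k j + (J q j - jet_interp J q tT q j) / bump_peak q * bump q k t
  end.

Lemma is_derive_jet_interp J p k j t : (k < order)%nat ->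
  is_derive (fun s => jet_interp J p s k j) t (jet_interp J p t (S k) j).
Proof.
  intros Hk. induction p; simpl; [apply is_derive_constR|].
  apply is_derive_plusR; auto. apply is_derive_scalR, is_derive_bump; auto.
Qed.

Lemma jet_interp_before J p k j t : t <= t0 -> jet_interp J p t k j = 0.
Proof. intros Ht. induction p; simpl; auto. rewrite IHp, bump_before; auto. ring. Qed.

Lemma jet_interp_at_end J p k j : (k < p)%nat -> jet_interp J p tT k j = J k j.
Proof.
  induction p; intros Hk; [lia|]. simpl.
  destruct (Nat.eq_dec k p) as [->|].
  - rewrite bump_jet_diag. field. apply Rgt_not_eq, bump_peak_pos.
  - rewrite IHp, bump_jet_below by lia. ring.
Qed.

Lemma jet_interp_bound p : (p <= order)%nat -> exists C, 0 <= C /\ forall J beta,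
  (forall k j, Rabs (J k j) <= beta) ->
  forall t, ia <= t <= ib -> forall k j, (k < order)%nat -> Rabs (jet_interp J p t k j) <= C * beta.
Proof.
  induction p; intros Hp.
  - exists 0. split; [lra|]. intros J beta HJ t Ht k j Hk. simpl.
    rewrite Rabs_R0. pose proof (Rle_trans _ _ _ (Rabs_pos _) (HJ 0%nat 0%nat)). lra.
  - destruct IHp as [C [HC H]]; [lia|]. destruct (bump_bounded p) as [B [HB HBp]].
    pose proof (bump_peak_pos p) as Hf.
    assert (Hfi : 0 <= / bump_peak p) by (apply Rlt_le, Rinv_0_lt_compat; auto).
    exists (C + (1 + C) / bump_peak p * B). split.
    { apply Rplus_le_le_0_compat; auto. apply Rmult_le_pos; auto. apply Rmult_le_pos; lra. }
    intros J beta HJ t Ht k j Hk. simpl.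
    assert (Hb0 : 0 <= beta) by (eapply Rle_trans; [apply Rabs_pos|apply (HJ 0%nat 0%nat)]).
    assert (H1 := H J beta HJ t Ht k j Hk).
    assert (H2 := H J beta HJ tT ltac:(lra) p j ltac:(lia)).
    assert (H3 := HBp k Hk t Ht).
    assert (H4 := HJ p j).
    assert (Hd : Rabs (J p j - jet_interp J p tT p j) <= (1 + C) * beta).
    { eapply Rle_trans; [apply Rabs_triang|]. rewrite Rabs_Ropp. lra. }
    eapply Rle_trans; [apply Rabs_triang|].
    unfold Rdiv. rewrite !Rabs_mult, (Rabs_right (/ bump_peak p)) by lra.
    assert (Rabs (J p j - jet_interp J p tT p j) * / bump_peak p * Rabs (bump p k t)
            <= (1 + C) * beta * / bump_peak p * B).
    { apply Rmult_le_compat; try apply Rmult_le_pos; try apply Rabs_pos; auto.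
      apply Rmult_le_compat_r; auto. }
    nra.
Qed.

End JetInterpolation.

(** * The column sweep *)

Section ColumnSweep.
Variable h : R.
Variable N : nat.
Hypothesis Hh : 0 < h.

Definition row_in (j : nat) : bool := (Nat.leb 1 j && Nat.leb j (N - 1))%bool.
Definition mask_rows (c : nat -> nat -> R) (k j : nat) : R := if row_in j then c k j else 0.

(* Columns are stored as jets [c k j] (k-th time derivative, row j). Solving the homogeneous
   semi-discrete equation at column i for column i-1 gives
   e_(i-1) = h^2 e_i'' + 4 e_i - e_(i+1) - e_i(j+1) - e_i(j-1). *)
Definition sweep_step (c cnext : nat -> nat -> R) (k j : nat) : R :=
  h ^ 2 * c (k + 2)%nat j + 4 * c k j - cnext k j - mask_rows c k (j + 1) - mask_rows c k (j - 1).

Fixpoint sweep_pair (Y : nat -> nat -> R) (n : nat) : (nat -> nat -> R) * (nat -> nat -> R) :=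
  match n with
  | O => (Y, fun _ _ => 0)
  | S n' => (sweep_step (fst (sweep_pair Y n')) (snd (sweep_pair Y n')), fst (sweep_pair Y n'))
  end.
Definition sweep Y n := fst (sweep_pair Y n).
Definition sweep_next Y n := snd (sweep_pair Y n).

Lemma sweep_S Y n k j : sweep Y (S n) k j = sweep_step (sweep Y n) (sweep_next Y n) k j.
Proof. reflexivity. Qed.
Lemma sweep_next_S Y n k j : sweep_next Y (S n) k j = sweep Y n k j.
Proof. reflexivity. Qed.

Lemma is_derive_sweep (Yt : R -> nat -> nat -> R) order t :
  (forall k j s, (k < order)%nat -> is_derive (fun s => Yt s k j) s (Yt s (S k) j)) ->
  forall n k j, (k + 2 * n < order)%nat ->
    is_derive (fun s => sweep (Yt s) n k j) t (sweep (Yt t) n (S k) j) /\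
    is_derive (fun s => sweep_next (Yt s) n k j) t (sweep_next (Yt t) n (S k) j).
Proof.
  intros HY n. induction n; intros k j Hk.
  - split; [apply HY; lia|unfold sweep_next; simpl; apply is_derive_constR].
  - split; [|apply IHn; lia].
    change (is_derive (fun s => sweep_step (sweep (Yt s) n) (sweep_next (Yt s) n) k j) t
              (sweep_step (sweep (Yt t) n) (sweep_next (Yt t) n) (S k) j)).
    unfold sweep_step, mask_rows. replace (S k + 2)%nat with (S (k + 2)) by lia.
    repeat apply is_derive_minusR.
    + apply is_derive_plusR; apply is_derive_scalR; apply IHn; lia.
    + apply IHn; lia.
    + destruct (row_in (j + 1)); [apply IHn; lia|apply is_derive_constR].
    + destruct (row_in (j - 1)); [apply IHn; lia|apply is_derive_constR].
Qed.

Lemma Rabs_sum5 a b c d e :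
  Rabs (a + b - c - d - e) <= Rabs a + Rabs b + Rabs c + Rabs d + Rabs e.
Proof. unfold Rabs; repeat destruct Rcase_abs; lra. Qed.

Lemma sweep_bound Y Q beta : (forall k j, (k <= Q)%nat -> Rabs (Y k j) <= beta) ->
  forall n k j, (k + 2 * n <= Q)%nat ->
    Rabs (sweep Y n k j) <= (h ^ 2 + 7) ^ n * beta /\
    Rabs (sweep_next Y n k j) <= (h ^ 2 + 7) ^ n * beta.
Proof.
  intros HY.
  assert (Hb : 0 <= beta) by (eapply Rle_trans; [apply Rabs_pos|apply (HY 0%nat 0%nat); lia]).
  assert (Hh2 : 0 <= h ^ 2) by apply pow2_ge_0.
  induction n; intros k j Hk.
  - simpl. rewrite Rmult_1_l. split; [apply HY; lia|]. unfold sweep_next; simpl.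
    rewrite Rabs_R0; auto.
  - assert (Hp : 1 <= (h ^ 2 + 7) ^ n) by (apply pow_R1_Rle; lra).
    replace ((h ^ 2 + 7) ^ S n) with ((h ^ 2 + 7) * (h ^ 2 + 7) ^ n) by (simpl; ring).
    set (P := (h ^ 2 + 7) ^ n) in *.
    destruct (IHn (k + 2)%nat j ltac:(lia)) as [A1 _].
    destruct (IHn k j ltac:(lia)) as [A2 A3].
    assert (Amask : forall j', Rabs (mask_rows (sweep Y n) k j') <= P * beta).
    { intros j'. unfold mask_rows; destruct (row_in j'); [apply IHn; lia|].
      rewrite Rabs_R0. apply Rmult_le_pos; lra. }
    split.
    + rewrite sweep_S. unfold sweep_step.
      pose proof (Amask (j + 1)%nat). pose proof (Amask (j - 1)%nat).
      assert (Rabs (h ^ 2 * sweep Y n (k + 2)%nat j) <= h ^ 2 * (P * beta)).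
      { rewrite Rabs_mult, Rabs_right by lra. apply Rmult_le_compat_l; lra. }
      assert (Rabs (4 * sweep Y n k j) <= 4 * (P * beta)).
      { rewrite Rabs_mult, Rabs_right by lra. apply Rmult_le_compat_l; lra. }
      eapply Rle_trans; [apply Rabs_sum5|]. nra.
    + rewrite sweep_next_S. assert (0 <= P * beta) by (apply Rmult_le_pos; lra). nra.
Qed.

Lemma sweep_local Y1 Y2 Q : (forall k j, (k <= Q)%nat -> Y1 k j = Y2 k j) ->
  forall n k j, (k + 2 * n <= Q)%nat ->
    sweep Y1 n k j = sweep Y2 n k j /\ sweep_next Y1 n k j = sweep_next Y2 n k j.
Proof.
  intros HY. induction n; intros k j Hk.
  - split; [apply HY; lia|reflexivity].
  - split; [|rewrite !sweep_next_S; apply IHn; lia].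
    rewrite !sweep_S. unfold sweep_step, mask_rows.
    rewrite (proj1 (IHn (k + 2)%nat j ltac:(lia))), (proj1 (IHn k j ltac:(lia))),
      (proj2 (IHn k j ltac:(lia))).
    destruct (row_in (j + 1)), (row_in (j - 1));
      try rewrite (proj1 (IHn k (j + 1)%nat ltac:(lia)));
      try rewrite (proj1 (IHn k (j - 1)%nat ltac:(lia))); reflexivity.
Qed.

Definition jet_update (J : nat -> nat -> R) (p : nat) (c : nat -> R) : nat -> nat -> R :=
  fun k j => J k j + (if Nat.eqb k p then c j else 0).

Lemma sweep_jet_update J p c : forall n k j, (k + 2 * n <= p)%nat ->
  sweep (jet_update J p c) n k j =
    sweep J n k j + (if Nat.eqb (k + 2 * n) p then h ^ (2 * n) * c j else 0) /\
  sweep_next (jet_update J p c) n k j = sweep_next J n k j.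
Proof.
  induction n; intros k j Hk.
  - split; [|reflexivity]. unfold sweep; simpl. unfold jet_update.
    replace (k + 0)%nat with k by lia. destruct (Nat.eqb k p); simpl; ring.
  - assert (Hne : Nat.eqb (k + 2 * n) p = false) by (apply Nat.eqb_neq; lia).
    split.
    + rewrite !sweep_S. unfold sweep_step.
      destruct (IHn (k + 2)%nat j ltac:(lia)) as [E1 _]. rewrite E1.
      destruct (IHn k j ltac:(lia)) as [E2 E3]. rewrite E2, E3, Hne.
      assert (E4 : forall j',
        mask_rows (sweep (jet_update J p c) n) k j' = mask_rows (sweep J n) k j').
      { intros j'. unfold mask_rows. destruct (row_in j'); auto.
        rewrite (proj1 (IHn k j' ltac:(lia))), Hne. ring. }
      rewrite !E4. replace (k + 2 + 2 * n)%nat with (k + 2 * S n)%nat by lia.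
      destruct (Nat.eqb (k + 2 * S n) p); [|ring].
      replace (2 * S n)%nat with (S (S (2 * n))) by lia. simpl. ring.
    + rewrite !sweep_next_S, (proj1 (IHn k j ltac:(lia))), Hne. ring.
Qed.

(* [X n o j] is the value (o = 0) or velocity (o = 1) wanted after [n] sweep steps; it fixes
   the seed jet of order [2n + o]. *)
Fixpoint jet_solve (X : nat -> nat -> nat -> R) (p : nat) : nat -> nat -> R :=
  match p with
  | O => fun _ _ => 0
  | S q => jet_update (jet_solve X q) q
      (fun j => (X (q / 2)%nat (q mod 2)%nat j - sweep (jet_solve X q) (q / 2)%nat (q mod 2)%nat j)
                / h ^ (2 * (q / 2))%nat)
  end.

Lemma sweep_jet_solve X p : forall n o j, (o <= 1)%nat -> (2 * n + o < p)%nat ->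
  sweep (jet_solve X p) n o j = X n o j.
Proof.
  induction p; intros n o j Ho Hp; [lia|]. cbn [jet_solve].
  match goal with |- sweep (jet_update ?J ?q ?c) _ _ _ = _ =>
    rewrite (proj1 (sweep_jet_update J q c n o j ltac:(lia))) end.
  destruct (Nat.eqb (o + 2 * n) p) eqn:Ep.
  - apply Nat.eqb_eq in Ep.
    assert (E1 : (p / 2 = n)%nat) by (symmetry; apply (Nat.div_unique p 2 n o); lia).
    assert (E2 : (p mod 2 = o)%nat) by (symmetry; apply (Nat.mod_unique p 2 n o); lia).
    rewrite E1, E2. field. apply pow_nonzero. lra.
  - apply Nat.eqb_neq in Ep. rewrite IHp by lia. ring.
Qed.

Fixpoint jet_solve_const (p : nat) : R :=
  match p with
  | O => 0
  | S q => jet_solve_const q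
           + (1 + (h ^ 2 + 7) ^ (q / 2)%nat * jet_solve_const q) / h ^ (2 * (q / 2))%nat
  end.

Lemma jet_solve_const_nonneg p : 0 <= jet_solve_const p.
Proof.
  assert (0 <= h ^ 2) by apply pow2_ge_0.
  induction p; simpl; [lra|]. apply Rplus_le_le_0_compat; auto. apply Rmult_le_pos.
  - apply Rplus_le_le_0_compat; [lra|]. apply Rmult_le_pos; auto. apply pow_le; lra.
  - apply Rlt_le, Rinv_0_lt_compat, pow_lt; lra.
Qed.

Lemma jet_solve_bound X zeta p : 0 <= zeta -> (forall n o j, Rabs (X n o j) <= zeta) ->
  forall k j, Rabs (jet_solve X p k j) <= jet_solve_const p * zeta.
Proof.
  intros Hz HX. assert (Hh2 : 0 <= h ^ 2) by apply pow2_ge_0.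
  induction p; intros k j; cbn [jet_solve jet_solve_const].
  - rewrite Rabs_R0. lra.
  - unfold jet_update. eapply Rle_trans; [apply Rabs_triang|]. rewrite Rmult_plus_distr_r.
    apply Rplus_le_compat; [apply IHp|].
    assert (Hp : 0 < h ^ (2 * (p / 2))%nat) by (apply pow_lt; lra).
    destruct (Nat.eqb k p).
    + unfold Rdiv. rewrite Rabs_mult, Rabs_inv, (Rabs_right (h ^ _)) by lra.
      rewrite (Rmult_comm (_ * _) zeta), <- Rmult_assoc, (Rmult_comm zeta).
      apply Rmult_le_compat_r; [apply Rlt_le, Rinv_0_lt_compat; auto|].
      eapply Rle_trans; [apply Rabs_triang|]. rewrite Rabs_Ropp.
      destruct (sweep_bound (jet_solve X p) (p / 2 * 2 + 1)%nat (jet_solve_const p * zeta)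
        (fun k j _ => IHp k j) (p / 2) (p mod 2)%nat j) as [B _].
      { pose proof (Nat.mod_upper_bound p 2 ltac:(lia)). lia. }
      pose proof (HX (p / 2)%nat (p mod 2)%nat j). nra.
    + rewrite Rabs_R0. apply Rmult_le_pos; auto. unfold Rdiv. apply Rmult_le_pos.
      * apply Rplus_le_le_0_compat; [lra|]. apply Rmult_le_pos; [apply pow_le; lra|].
        apply jet_solve_const_nonneg.
      * apply Rlt_le, Rinv_0_lt_compat; auto.
Qed.

End ColumnSweep.

(** * The boundary coefficient *)

(* With [a1], [a2] the state on the first two columns and [r] the value the homogeneous scheme
   would need on column 0, the perturbed first-column equation holds iff
   [(2 + 2/(1+l)) a1 - 2/(2+l) a2 = 4 a1 - a2 - r]; clearing the denominators
   [(1+l)(2+l)] gives this quadratic in [l]. *)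
Definition bnd_quad (l r a1 a2 : R) :=
  (a2 - 2 * a1 + r) * l ^ 2 + (a2 - 4 * a1 + 3 * r) * l + 2 * r.

(* The root of [A l^2 + B l + C] that is small when [C] is, written without dividing by [A]. *)
Lemma quadratic_root_eq A B C : B <> 0 -> 0 <= B ^ 2 - 4 * A * C ->
  let L := - 2 * C * B / (B ^ 2 + sqrt (B ^ 2 * (B ^ 2 - 4 * A * C))) in
  A * L ^ 2 + B * L + C = 0.
Proof.
  intros HB HD L. set (s := sqrt (B ^ 2 * (B ^ 2 - 4 * A * C))).
  assert (Hs0 : 0 <= s) by apply sqrt_pos.
  assert (Hs : s * s = B ^ 2 * (B ^ 2 - 4 * A * C)).
  { apply sqrt_sqrt. apply Rmult_le_pos; auto. apply pow2_ge_0. }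
  assert (HB2 : 0 < B ^ 2) by (apply pow2_gt_0; auto).
  assert (HL : L * (B ^ 2 + s) = - 2 * C * B) by (unfold L; fold s; field; lra).
  apply Rmult_eq_reg_r with ((B ^ 2 + s) ^ 2); [|apply pow_nonzero; lra].
  replace ((A * L ^ 2 + B * L + C) * (B ^ 2 + s) ^ 2) with
    (A * (L * (B ^ 2 + s)) ^ 2 + B * (L * (B ^ 2 + s)) * (B ^ 2 + s) + C * (B ^ 2 + s) ^ 2)
    by ring.
  rewrite HL.
  replace (A * (- 2 * C * B) ^ 2 + B * (- 2 * C * B) * (B ^ 2 + s) + C * (B ^ 2 + s) ^ 2)
    with (C * (4 * A * C * B ^ 2 - B ^ 4 + s * s)) by ring.
  rewrite Hs. ring.
Qed.

Section BoundaryRoot.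
Variables (rho rhod a1 a1d a2 a2d : R -> R) (t0 t1 tb m G eps : R).
Hypothesis Ht : 0 < t1 < t0 /\ t0 < tb.
Hypothesis Hm : 0 < m.
Hypothesis HG : 0 <= G.
Hypothesis Heps : 0 <= eps /\ eps <= m / 16 /\ 8 * eps * G <= m ^ 2 / 2 /\
  2 * eps * (3 * m + 28 * G) <= m ^ 2 / 2.
Hypothesis Hrho0 : forall s, s <= t0 -> rho s = 0 /\ rhod s = 0.
Hypothesis Hrho : forall s, is_derive rho s (rhod s) /\ continuous rhod s.
Hypothesis Ha : forall s, t1 < s -> is_derive a1 s (a1d s) /\ is_derive a2 s (a2d s) /\
  continuous a1d s /\ continuous a2d s.
Hypothesis Hb : forall s, t1 <= s <= tb ->
  m <= Rabs (a2 s - 4 * a1 s + 3 * rho s) /\ Rabs (a2 s - 2 * a1 s + rho s) <= G /\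
  Rabs (rho s) <= eps /\ Rabs (rhod s) <= eps /\ Rabs (a1d s) <= G /\ Rabs (a2d s) <= G.

Definition qa s := a2 s - 2 * a1 s + rho s.
Definition qb s := a2 s - 4 * a1 s + 3 * rho s.
Definition qc s := 2 * rho s.
Definition lam_root s :=
  - 2 * qc s * qb s / (qb s ^ 2 + sqrt (qb s ^ 2 * (qb s ^ 2 - 4 * qa s * qc s))).

(* Implicit differentiation of [bnd_quad (lam_root s) (rho s) (a1 s) (a2 s) = 0]. *)
Definition lam_root_deriv s :=
  - ((lam_root s ^ 2 + 3 * lam_root s + 2) * rhod s
     + (- 2 * lam_root s ^ 2 - 4 * lam_root s) * a1d s
     + (lam_root s ^ 2 + lam_root s) * a2d s) / (2 * qa s * lam_root s + qb s).

Lemma lam_root_before s : s <= t0 -> lam_root s = 0 /\ lam_root_deriv s = 0.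
Proof.
  intros Hs. destruct (Hrho0 s Hs) as [E1 E2].
  assert (E : lam_root s = 0) by (unfold lam_root, qc; rewrite E1; unfold Rdiv; ring).
  split; auto. unfold lam_root_deriv. rewrite E, E2. unfold Rdiv. ring.
Qed.

Lemma lam_root_spec s : t1 <= s <= tb ->
  Rabs (lam_root s) <= 4 * eps / m /\ 0 < qb s ^ 2 - 4 * qa s * qc s /\
  bnd_quad (lam_root s) (rho s) (a1 s) (a2 s) = 0 /\
  m / 2 <= Rabs (2 * qa s * lam_root s + qb s).
Proof.
  intros Hs. destruct (Hb s Hs) as [B1 [B2 [B3 _]]].
  fold (qb s) in B1. fold (qa s) in B2.
  destruct Heps as [E1 [E2 [E3 _]]].
  assert (Hm2 : 0 < m ^ 2) by (apply pow_lt; lra).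
  assert (HB0 : qb s <> 0) by (intro E; rewrite E, Rabs_R0 in B1; lra).
  assert (HC : Rabs (qc s) <= 2 * eps) by (unfold qc; rewrite Rabs_mult, Rabs_right by lra; lra).
  assert (HAC : Rabs (4 * qa s * qc s) <= 8 * eps * G).
  { rewrite !Rabs_mult, (Rabs_right 4) by lra.
    pose proof (Rabs_pos (qa s)). pose proof (Rabs_pos (qc s)). nra. }
  assert (HB2 : m ^ 2 <= qb s ^ 2) by (rewrite <- (pow2_abs (qb s)); apply pow_incr; lra).
  assert (HD : 0 < qb s ^ 2 - 4 * qa s * qc s) by (apply Rabs_le_inv in HAC; lra).
  set (sq := sqrt (qb s ^ 2 * (qb s ^ 2 - 4 * qa s * qc s))).
  assert (Hsq : 0 <= sq) by apply sqrt_pos.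
  assert (HL : Rabs (lam_root s) <= 4 * eps / m).
  { unfold lam_root. fold sq. unfold Rdiv.
    rewrite Rabs_mult, Rabs_inv, (Rabs_right (_ + sq)), !Rabs_mult by lra.
    replace (Rabs (-2)) with 2 by (unfold Rabs; destruct Rcase_abs; lra).
    apply Rle_trans with (2 * Rabs (qc s) * Rabs (qb s) * / qb s ^ 2).
    { apply Rmult_le_compat_l; [|apply Rinv_le_contravar; lra].
      apply Rmult_le_pos; [apply Rmult_le_pos; [lra|apply Rabs_pos]|apply Rabs_pos]. }
    rewrite <- (pow2_abs (qb s)).
    replace (2 * Rabs (qc s) * Rabs (qb s) * / Rabs (qb s) ^ 2) with (2 * Rabs (qc s) / Rabs (qb s))
      by (field; lra).
    unfold Rdiv. apply Rmult_le_compat; [apply Rmult_le_pos; [lra|apply Rabs_pos]| |lra|].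
    - apply Rlt_le, Rinv_0_lt_compat; lra.
    - apply Rinv_le_contravar; lra. }
  assert (HPl : m / 2 <= Rabs (2 * qa s * lam_root s + qb s)).
  { assert (Rabs (2 * qa s * lam_root s) <= 2 * G * (4 * eps / m)).
    { rewrite !Rabs_mult, (Rabs_right 2) by lra.
      apply Rmult_le_compat; try lra; [apply Rmult_le_pos; [lra|apply Rabs_pos]|apply Rabs_pos]. }
    assert (2 * G * (4 * eps / m) <= m / 2).
    { replace (2 * G * (4 * eps / m)) with ((8 * eps * G) / m) by (field; lra).
      apply Rmult_le_reg_r with m; [lra|]. unfold Rdiv.
      rewrite Rmult_assoc, Rinv_l, Rmult_1_r by lra. nra. }
    pose proof (Rabs_triang_inv (qb s) (- (2 * qa s * lam_root s))) as Htri.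
    rewrite Rabs_Ropp in Htri.
    replace (qb s - - (2 * qa s * lam_root s)) with (2 * qa s * lam_root s + qb s) in Htri by ring.
    lra. }
  repeat split; auto.
  exact (quadratic_root_eq (qa s) (qb s) (qc s) HB0 (Rlt_le _ _ HD)).
Qed.

Lemma lam_root_small s : t1 <= s <= tb -> Rabs (lam_root s) <= 1 / 4.
Proof.
  intros Hs. destruct Heps as [_ [E2 _]].
  eapply Rle_trans; [apply (lam_root_spec s Hs)|].
  apply Rmult_le_reg_r with m; auto. unfold Rdiv. rewrite Rmult_assoc, Rinv_l by lra. lra.
Qed.

Lemma lam_root_deriv_small s : t1 <= s <= tb -> Rabs (lam_root_deriv s) <= 1 / 2.
Proof.
  intros Hs. destruct (Hb s Hs) as [_ [_ [_ [B4 [B5 B6]]]]].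
  destruct (lam_root_spec s Hs) as [HL [_ [_ HPl]]].
  pose proof (lam_root_small s Hs) as HL4.
  destruct Heps as [E1 [_ [_ E4]]].
  unfold lam_root_deriv, Rdiv. rewrite Rabs_mult, Rabs_Ropp, Rabs_inv.
  set (L := lam_root s) in *. set (Q := Rabs (2 * qa s * L + qb s)) in *.
  assert (HN : Rabs ((L ^ 2 + 3 * L + 2) * rhod s + (-2 * L ^ 2 - 4 * L) * a1d s
                     + (L ^ 2 + L) * a2d s) <= 3 * eps + 7 * Rabs L * G).
  { apply Rabs_le_inv in HL4.
    assert (Rabs (L ^ 2 + 3 * L + 2) <= 3) by (apply Rabs_le; nra).
    assert (Rabs (-2 * L ^ 2 - 4 * L) <= 5 * Rabs L)
      by (unfold Rabs; repeat destruct Rcase_abs; nra).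
    assert (Rabs (L ^ 2 + L) <= 2 * Rabs L) by (unfold Rabs; repeat destruct Rcase_abs; nra).
    eapply Rle_trans; [apply Rabs_triang|].
    eapply Rle_trans; [apply Rplus_le_compat_r, Rabs_triang|].
    rewrite !Rabs_mult.
    pose proof (Rabs_pos L). pose proof (Rabs_pos (rhod s)). pose proof (Rabs_pos (a1d s)).
    pose proof (Rabs_pos (a2d s)). pose proof (Rabs_pos (L ^ 2 + 3 * L + 2)).
    nra. }
  apply Rle_trans with ((3 * eps + 7 * (4 * eps / m) * G) * / (m / 2)).
  - apply Rmult_le_compat; [apply Rabs_pos|apply Rlt_le, Rinv_0_lt_compat; lra| |].
    + assert (7 * Rabs L * G <= 7 * (4 * eps / m) * G) by (apply Rmult_le_compat_r; lra). lra.
    + apply Rinv_le_contravar; lra.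
  - replace ((3 * eps + 7 * (4 * eps / m) * G) * / (m / 2))
      with (2 * eps * (3 * m + 28 * G) / m ^ 2) by (field; lra).
    apply Rmult_le_reg_r with (m ^ 2); [apply pow_lt; lra|]. unfold Rdiv.
    rewrite Rmult_assoc, Rinv_l by (apply pow_nonzero; lra). lra.
Qed.

Lemma is_derive_lam_root s : s < tb ->
  is_derive lam_root s (lam_root_deriv s) /\ continuous lam_root_deriv s.
Proof.
  intros Hsb. destruct (Rlt_dec s t0) as [Hs|Hs].
  - assert (Loc : exists e, 0 < e /\ forall t, Rabs (t - s) < e -> t <= t0).
    { exists (t0 - s). split; [lra|]. intros t Htt. apply Rabs_def2 in Htt; lra. }
    destruct Loc as [e [He Hl]]. split.
    + rewrite (proj2 (lam_root_before s ltac:(lra))).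
      apply is_derive_ext_near with (fun _ => 0); [apply is_derive_constR|].
      exists e; split; auto. intros t Htt. rewrite (proj1 (lam_root_before t (Hl t Htt))); auto.
    + apply continuous_ext_near with (fun _ => 0); [apply continuous_constR|].
      exists e; split; auto. intros t Htt. rewrite (proj2 (lam_root_before t (Hl t Htt))); auto.
  - destruct (Ha s ltac:(lra)) as [Da1 [Da2 [Ca1 Ca2]]]. destruct (Hrho s) as [Dr Cr].
    destruct (lam_root_spec s ltac:(lra)) as [_ [HD [_ HPl]]].
    assert (HB0 : qb s <> 0).
    { destruct (Hb s ltac:(lra)) as [B1 _]. fold (qb s) in B1.
      intro E; rewrite E, Rabs_R0 in B1; lra. }
    assert (HB2 : 0 < qb s ^ 2) by (apply pow2_gt_0; auto).
    assert (HPl0 : 2 * qa s * lam_root s + qb s <> 0) by (intro E; rewrite E, Rabs_R0 in HPl; lra).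
    assert (Ex : ex_derive lam_root s).
    { unfold lam_root, qa, qb, qc. auto_derive. repeat split; try (eexists; eauto).
      - replace (a2 s + - (4 * a1 s) + 3 * rho s) with (qb s) by (unfold qb; ring).
        replace (a2 s + - (2 * a1 s) + rho s) with (qa s) by (unfold qa; ring).
        replace (2 * rho s) with (qc s) by reflexivity.
        replace (qb s * (qb s * 1) * (qb s * (qb s * 1) + - (4 * qa s * qc s))) with
          (qb s ^ 2 * (qb s ^ 2 - 4 * qa s * qc s)) by ring.
        apply Rmult_lt_0_compat; auto.
      - replace (a2 s + - (4 * a1 s) + 3 * rho s) with (qb s) by (unfold qb; ring).
        replace (qb s * (qb s * 1)) with (qb s ^ 2) by ring.
        match goal with |- _ + sqrt ?y <> 0 => assert (0 <= sqrt y) by apply sqrt_pos end.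
        lra. }
    destruct Ex as [L HL].
    set (g := fun x => bnd_quad (lam_root x) (rho x) (a1 x) (a2 x)).
    assert (Hg1 : is_derive g s ((a2d s - 2 * a1d s + rhod s) * lam_root s ^ 2
       + (a2 s - 2 * a1 s + rho s) * (2 * lam_root s * L)
       + (a2d s - 4 * a1d s + 3 * rhod s) * lam_root s + (a2 s - 4 * a1 s + 3 * rho s) * L
       + 2 * rhod s)).
    { unfold g, bnd_quad. auto_derive; [repeat split; eexists; eauto|].
      rewrite (Derive_is_derive a1 _ _ Da1), (Derive_is_derive a2 _ _ Da2),
        (Derive_is_derive rho _ _ Dr), (Derive_is_derive lam_root _ _ HL). ring. }
    assert (Hg0 : is_derive g s 0).
    { apply is_derive_ext_near with (fun _ => 0); [apply is_derive_constR|].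
      exists (Rmin (s - t1) (tb - s)). split; [apply Rmin_pos; lra|].
      intros t Htt.
      assert (Rabs (t - s) < s - t1) as H1 by (eapply Rlt_le_trans; [apply Htt|apply Rmin_l]).
      assert (Rabs (t - s) < tb - s) as H2 by (eapply Rlt_le_trans; [apply Htt|apply Rmin_r]).
      apply Rabs_def2 in H1, H2.
      unfold g. symmetry. apply (lam_root_spec t ltac:(lra)). }
    assert (EL : L = lam_root_deriv s).
    { pose proof (is_derive_unique _ _ _ Hg1) as E1. pose proof (is_derive_unique _ _ _ Hg0) as E2.
      rewrite E1 in E2. change (@eq R L (lam_root_deriv s)).
      apply (Rmult_eq_reg_r (2 * qa s * lam_root s + qb s)); auto.
      assert (Hd : lam_root_deriv s * (2 * qa s * lam_root s + qb s) =
        - ((lam_root s ^ 2 + 3 * lam_root s + 2) * rhod s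
           + (- 2 * lam_root s ^ 2 - 4 * lam_root s) * a1d s
           + (lam_root s ^ 2 + lam_root s) * a2d s)) by (unfold lam_root_deriv; field; auto).
      rewrite Hd. apply Rminus_diag_uniq. rewrite <- E2. unfold qa, qb. ring. }
    subst L. split; auto.
    pose proof (is_derive_continuous _ _ _ HL). pose proof (is_derive_continuous _ _ _ Da1).
    pose proof (is_derive_continuous _ _ _ Da2). pose proof (is_derive_continuous _ _ _ Dr).
    unfold lam_root_deriv. apply continuous_divR; [continuity_tac|continuity_tac|auto].
Qed.

Lemma lam_root_props s : s < tb ->
  Rabs (lam_root s) <= 1 / 4 /\ Rabs (lam_root_deriv s) <= 1 / 2 /\
  bnd_quad (lam_root s) (rho s) (a1 s) (a2 s) = 0.
Proof.
  intros Hs. destruct (Rle_dec s t0) as [H0|H0].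
  - destruct (lam_root_before s H0) as [Z1 Z2]. rewrite Z1, Z2, Rabs_R0.
    unfold bnd_quad. rewrite (proj1 (Hrho0 s H0)). repeat split; lra.
  - assert (Hs' : t1 <= s <= tb) by lra.
    split; [apply lam_root_small|split; [apply lam_root_deriv_small|apply lam_root_spec]]; auto.
Qed.

End BoundaryRoot.

(** * The controlled state *)

Definition pos_part (x : R) := (x + Rabs x) / 2.

Lemma pos_part_nonpos x : x <= 0 -> pos_part x = 0.
Proof. intros; unfold pos_part; rewrite Rabs_left1 by lra; lra. Qed.
Lemma pos_part_nonneg x : 0 <= x -> pos_part x = x.
Proof. intros; unfold pos_part; rewrite Rabs_right by lra; lra. Qed.
Lemma pos_part_ge0 x : 0 <= pos_part x.
Proof. destruct (Rle_dec x 0); [rewrite pos_part_nonpos|rewrite pos_part_nonneg]; lra. Qed.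
Lemma continuous_pos_part (f : R -> R) x : continuous f x -> continuous (fun t => pos_part (f t)) x.
Proof.
  intros H. unfold pos_part. apply continuous_divR; [|apply continuous_constR|lra].
  apply continuous_plusR; auto. apply (continuous_Rabs_comp f); auto.
Qed.

Section Squash.
Variable T : R.

Definition squash t := t - pos_part (t - T) + pos_part (t - T) / (1 + pos_part (t - T)).
Definition squash_deriv t := 1 / (1 + pos_part (t - T)) ^ 2.

Lemma squash_id t : t <= T -> squash t = t.
Proof. intros; unfold squash; rewrite pos_part_nonpos by lra. field. Qed.

Lemma squash_beyond t : T <= t -> squash t = T + (t - T) / (1 + (t - T)).
Proof. intros; unfold squash; rewrite pos_part_nonneg by lra. field. lra. Qed.

Lemma squash_range t : 0 <= T -> 0 <= t -> 0 <= squash t < T + 1.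
Proof.
  intros HT Ht. destruct (Rle_dec t T); [rewrite squash_id; lra|].
  rewrite squash_beyond by lra.
  assert (0 <= (t - T) / (1 + (t - T)))
    by (apply Rmult_le_pos; [lra|apply Rlt_le, Rinv_0_lt_compat; lra]).
  assert ((t - T) / (1 + (t - T)) < 1).
  { apply Rmult_lt_reg_r with (1 + (t - T)); [lra|]. unfold Rdiv.
    rewrite Rmult_assoc, Rinv_l by lra. lra. }
  lra.
Qed.

Lemma squash_deriv_bound t : 0 <= squash_deriv t <= 1.
Proof.
  unfold squash_deriv. pose proof (pos_part_ge0 (t - T)).
  assert (1 <= (1 + pos_part (t - T)) ^ 2) by (apply pow_R1_Rle; lra).
  split; [apply Rmult_le_pos; [lra|apply Rlt_le, Rinv_0_lt_compat; lra]|].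
  unfold Rdiv. rewrite Rmult_1_l, <- Rinv_1. apply Rinv_le_contravar; lra.
Qed.

Lemma continuous_squash_deriv t : continuous squash_deriv t.
Proof.
  unfold squash_deriv. pose proof (pos_part_ge0 (t - T)).
  apply continuous_divR; [apply continuous_constR| |apply pow_nonzero; lra].
  apply continuous_powR, continuous_plusR; [apply continuous_constR|].
  apply continuous_pos_part, continuous_minusR; [apply (continuous_id (U:=R_UniformSpace))|].
  apply continuous_constR.
Qed.

Lemma is_derive_squash t : is_derive squash t (squash_deriv t).
Proof.
  set (f2 := fun x => T + (x - T) / (1 + (x - T))).
  assert (D2 : forall x, T - 1 / 2 < x -> is_derive f2 x (1 / (1 + (x - T)) ^ 2)).
  { intros x Hx. unfold f2. auto_derive; [lra|field; lra]. }
  assert (D1 : forall x, x <= T -> is_derive (fun x => x) x (squash_deriv x)).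
  { intros x Hx. unfold squash_deriv. rewrite pos_part_nonpos by lra.
    eapply is_derive_eq; [apply is_derive_idR|reflexivity|].
    match goal with |- ?x = ?y => change (@eq R x y) end. field. }
  destruct (Rtotal_order t T) as [H|[->|H]].
  - apply is_derive_ext_near with (fun x => x); [apply D1; lra|].
    exists (T - t). split; [lra|]. intros x Hx. apply Rabs_def2 in Hx. rewrite squash_id; lra.
  - apply is_derive_glue with (fun x => x) f2; [apply D1; lra| | |].
    + unfold squash_deriv. rewrite pos_part_nonpos by lra.
      eapply is_derive_eq; [apply D2; lra|reflexivity|]. rewrite Rminus_diag. reflexivity.
    + intros; apply squash_id; auto.
    + intros; apply squash_beyond; auto.
  - unfold squash_deriv. rewrite pos_part_nonneg by lra.
    apply is_derive_ext_near with f2; [apply D2; lra|].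
    exists (t - T). split; [lra|]. intros x Hx. apply Rabs_def2 in Hx.
    rewrite squash_beyond; [reflexivity|lra].
Qed.

End Squash.

Lemma interiorb_spec M N i j : interiorb M N i j = true <-> inner_node M N i j.
Proof. unfold interiorb, inner_node. rewrite !Bool.andb_true_iff, !Nat.leb_le. tauto. Qed.

Lemma ext_inner M N u i j : inner_node M N i j -> ext M N u i j = u i j.
Proof. intros H. unfold ext. apply interiorb_spec in H. rewrite H. auto. Qed.

Lemma ext_outer M N u i j : ~ inner_node M N i j -> ext M N u i j = 0.
Proof.
  intros H. unfold ext. destruct (interiorb M N i j) eqn:E; auto.
  apply interiorb_spec in E. tauto.
Qed.

Lemma ext_plus M N (u v : grid) i j :
  ext M N (fun a b => u a b + v a b) i j = ext M N u i j + ext M N v i j.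
Proof. unfold ext. destruct (interiorb M N i j); ring. Qed.

Lemma row_in_spec N j : row_in N j = true <-> (1 <= j <= N - 1)%nat.
Proof. unfold row_in. rewrite Bool.andb_true_iff, !Nat.leb_le. tauto. Qed.

(* [U*] is the reference state, [E*] the correction and [rho] its column-0 value. *)
Lemma first_column_eq (h L rho U1 U2 U1p U1m E1 E2 E1p E1m c2 au Fv : R) :
  0 < h -> Rabs L <= 1 / 4 ->
  rho = h ^ 2 * c2 + 4 * E1 - E2 - E1p - E1m ->
  bnd_quad L rho (U1 + E1) (U2 + E2) = 0 ->
  au + / (h ^ 2) * (2 * (1 + 1 / (1 + 0)) * U1 - 2 / (2 + 0) * U2 - U1p - U1m) = Fv ->
  au + c2 + / (h ^ 2) * (2 * (1 + 1 / (1 + L)) * (U1 + E1) - 2 / (2 + L) * (U2 + E2)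
     - (U1p + E1p) - (U1m + E1m)) = Fv.
Proof.
  intros Hh HL Hr HP HF. apply Rabs_le_inv in HL.
  assert (h ^ 2 <> 0) by (apply pow_nonzero; lra).
  replace c2 with ((rho - 4 * E1 + E2 + E1p + E1m) / h ^ 2) by (rewrite Hr; field; lra).
  rewrite <- HF. apply Rminus_diag_uniq.
  replace (au + (rho - 4 * E1 + E2 + E1p + E1m) / h ^ 2 +
   / h ^ 2 * (2 * (1 + 1 / (1 + L)) * (U1 + E1) - 2 / (2 + L) * (U2 + E2) - (U1p + E1p)
              - (U1m + E1m)) -
   (au + / h ^ 2 * (2 * (1 + 1 / (1 + 0)) * U1 - 2 / (2 + 0) * U2 - U1p - U1m)))
  with (bnd_quad L rho (U1 + E1) (U2 + E2) / (h ^ 2 * (1 + L) * (2 + L)))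
    by (unfold bnd_quad; field; repeat split; lra).
  rewrite HP. unfold Rdiv; ring.
Qed.

Lemma interior_column_eq (h c2 U Ua Ub Uc Ud E Ea Eb Ec Ed au Fv : R) :
  0 < h -> Eb = h ^ 2 * c2 + 4 * E - Ea - Ec - Ed ->
  au + / (h ^ 2) * (4 * U - Ua - Ub - Uc - Ud) = Fv ->
  au + c2 + / (h ^ 2) * (4 * (U + E) - (Ua + Ea) - (Ub + Eb) - (Uc + Ec) - (Ud + Ed)) = Fv.
Proof. intros Hh Hb HF. rewrite <- HF, Hb. field. lra. Qed.

Lemma small_eps_exists m G : 0 < m -> 0 <= G -> exists e0, 0 < e0 /\
  forall eps, 0 <= eps <= e0 ->
    eps <= m / 16 /\ 8 * eps * G <= m ^ 2 / 2 /\ 2 * eps * (3 * m + 28 * G) <= m ^ 2 / 2.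
Proof.
  intros Hm HG. assert (Hm2 : 0 < m ^ 2) by (apply pow_lt; lra).
  exists (Rmin (m / 16) (Rmin (m ^ 2 / (16 * G + 1)) (m ^ 2 / (4 * (3 * m + 28 * G) + 1)))).
  split; [repeat apply Rmin_pos; apply Rdiv_lt_0_compat; lra|].
  intros eps [He0 He].
  assert (E2 : eps <= m / 16) by (eapply Rle_trans; [apply He|apply Rmin_l]).
  assert (E3 : eps * (16 * G + 1) <= m ^ 2).
  { apply Rle_trans with (m ^ 2 / (16 * G + 1) * (16 * G + 1)); [|right; field; lra].
    apply Rmult_le_compat_r; [lra|].
    eapply Rle_trans; [apply He|]. eapply Rle_trans; [apply Rmin_r|apply Rmin_l]. }
  assert (E4 : eps * (4 * (3 * m + 28 * G) + 1) <= m ^ 2).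
  { apply Rle_trans with (m ^ 2 / (4 * (3 * m + 28 * G) + 1) * (4 * (3 * m + 28 * G) + 1));
      [|right; field; lra].
    apply Rmult_le_compat_r; [lra|].
    eapply Rle_trans; [apply He|]. eapply Rle_trans; [apply Rmin_r|apply Rmin_r]. }
  repeat split; nra.
Qed.

Section Control.
Variables (M N : nat) (h T : R) (F : R -> grid) (u0 u1 : grid) (u du : R -> grid).
Hypothesis HM : (2 <= M)%nat.
Hypothesis HN : (2 <= N)%nat.
Hypothesis Hh : 0 < h.
Hypothesis HT : 0 < T.
Hypothesis Hu : solves_on (fun t => 0 <= t) M N h F (fun _ _ => 0) u0 u1 u du.
Hypothesis Hnd : forall t, 0 < t -> forall j, (1 <= j <= N - 1)%nat ->
  / 2 * ext M N (u t) 2%nat j - 2 * ext M N (u t) 1%nat j <> 0.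

Definition t_on := T / 2.
Definition t_lo := T / 4.
Definition t_hi := T + 1.
Definition order := (2 * M + 2)%nat.
Definition njets := (2 * M - 2)%nat.

(* The correction is built from the last interior column [M - 1] leftwards, so sweep step [n]
   is grid column [M - 1 - n]; [o = 0] and [o = 1] select the position and velocity targets. *)
Definition target_jet (Z : grid * grid) (n o j : nat) : R :=
  if (Nat.leb n (M - 2) && row_in N j)%bool then
    (if Nat.eqb o 0 then fst Z (M - 1 - n)%nat j - u T (M - 1 - n)%nat j
     else snd Z (M - 1 - n)%nat j - du T (M - 1 - n)%nat j)
  else 0.

Definition seed Z := jet_interp t_on T order (jet_solve h N (target_jet Z) njets) njets.
Definition corr Z s n k j := sweep h N (seed Z s) n k j.
Definition corr_next Z s n k j := sweep_next h N (seed Z s) n k j.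
Definition state Z t : grid := fun i j => u t i j + corr Z t (M - 1 - i) 0 j.
Definition velocity Z t : grid := fun i j => du t i j + corr Z t (M - 1 - i) 1%nat j.

Lemma ref_derive t i j : 0 <= t -> inner_node M N i j ->
  is_derive (fun s => u s i j) t (du t i j) /\ exists a, is_derive (fun s => du s i j) t a /\
   a + Aop h (fun _ => 0) (ext M N (u t)) i j = F t i j.
Proof.
  intros Ht Hin. destruct (Hu i j Hin) as [_ [_ H]].
  destruct (H t Ht) as [a [A1 [A2 A3]]]. split; eauto.
Qed.

Lemma is_derive_ext_ref t i j : 0 <= t ->
  is_derive (fun s => ext M N (u s) i j) t (ext M N (du t) i j) /\
  continuous (fun s => ext M N (du s) i j) t.
Proof.
  intros Ht. destruct (classic (inner_node M N i j)) as [Hin|Hout].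
  - destruct (ref_derive t i j Ht Hin) as [D1 [a [D2 _]]]. rewrite ext_inner by auto. split.
    + eapply is_derive_eq; [apply D1| |reflexivity]. intros s. rewrite ext_inner; auto.
    + apply (continuous_ext (fun s => du s i j)); [intros s; rewrite ext_inner; auto|].
      apply (is_derive_continuous _ _ _ D2).
  - rewrite ext_outer by auto. split.
    + eapply is_derive_eq; [apply (is_derive_constR 0)| |reflexivity].
      intros s; rewrite ext_outer; auto.
    + apply (continuous_ext (fun _ => 0)); [intros s; rewrite ext_outer; auto|].
      apply continuous_constR.
Qed.

Lemma is_derive_corr Z n k j t : (k + 2 * n < order)%nat ->
  is_derive (fun s => corr Z s n k j) t (corr Z t n (S k) j) /\
  is_derive (fun s => corr_next Z s n k j) t (corr_next Z t n (S k) j).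
Proof.
  intros H. apply (is_derive_sweep h N (seed Z) order t); auto.
  intros; apply is_derive_jet_interp; auto.
Qed.

Lemma corr_before Z s n k j : s <= t_on -> corr Z s n k j = 0 /\ corr_next Z s n k j = 0.
Proof.
  intros Hs. destruct (sweep_bound h N (seed Z s) (k + 2 * n) 0) with n k j as [B1 B2].
  - intros k' j' _. unfold seed. rewrite jet_interp_before by auto. rewrite Rabs_R0; lra.
  - lia.
  - rewrite Rmult_0_r in B1, B2. unfold corr, corr_next.
    split; apply Rabs_eq_0; apply Rle_antisym; auto; apply Rabs_pos.
Qed.

Definition near_target (Z : grid * grid) (zeta : R) :=
  forall i j, inner_node M N i j ->
    Rabs (fst Z i j - u T i j) <= zeta /\ Rabs (snd Z i j - du T i j) <= zeta.

Lemma target_jet_bound Z zeta : 0 <= zeta -> near_target Z zeta ->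
  forall n o j, Rabs (target_jet Z n o j) <= zeta.
Proof.
  intros Hz HZ n o j. unfold target_jet.
  destruct (Nat.leb n (M - 2)) eqn:E1; [|simpl; rewrite Rabs_R0; auto].
  destruct (row_in N j) eqn:E2; [|simpl; rewrite Rabs_R0; auto]. simpl.
  apply Nat.leb_le in E1. apply row_in_spec in E2.
  destruct (HZ (M - 1 - n)%nat j) as [H1 H2]; [unfold inner_node; lia|].
  destruct (Nat.eqb o 0); auto.
Qed.

Lemma corr_bound : exists Ce, 0 <= Ce /\ forall Z zeta, 0 <= zeta -> near_target Z zeta ->
  forall s, t_lo <= s <= t_hi -> forall n k j, (n <= M - 1)%nat -> (k + 2 * n <= order - 1)%nat ->
  Rabs (corr Z s n k j) <= Ce * zeta /\ Rabs (corr_next Z s n k j) <= Ce * zeta.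
Proof.
  destruct (jet_interp_bound t_on T t_lo t_hi order ltac:(unfold t_on; lra)
    ltac:(unfold t_lo, t_hi; lra) njets ltac:(unfold njets, order; lia)) as [C [HC HY]].
  pose proof (jet_solve_const_nonneg h Hh njets) as HCJ.
  assert (Hq : 1 <= h ^ 2 + 7) by (pose proof (pow2_ge_0 h); lra).
  exists ((h ^ 2 + 7) ^ (M - 1) * (C * jet_solve_const h njets)). split.
  { apply Rmult_le_pos; [apply pow_le; lra|]. apply Rmult_le_pos; auto. }
  intros Z zeta Hz HZ s Hs n k j Hn Hk.
  pose proof (jet_solve_bound h N Hh (target_jet Z) zeta njets Hz (target_jet_bound Z zeta Hz HZ))
    as HJ.
  assert (HYs : forall k' j', (k' <= order - 1)%nat ->
    Rabs (seed Z s k' j') <= C * (jet_solve_const h njets * zeta)).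
  { intros k' j' Hk'. unfold seed. apply HY; auto. unfold order in *; lia. }
  destruct (sweep_bound h N (seed Z s) (order - 1) _ HYs n k j Hk) as [B1 B2].
  assert (Hp : (h ^ 2 + 7) ^ n <= (h ^ 2 + 7) ^ (M - 1)) by (apply Rle_pow; auto).
  assert (0 <= C * (jet_solve_const h njets * zeta)) by (repeat apply Rmult_le_pos; auto).
  replace ((h ^ 2 + 7) ^ (M - 1) * (C * jet_solve_const h njets) * zeta)
    with ((h ^ 2 + 7) ^ (M - 1) * (C * (jet_solve_const h njets * zeta))) by ring.
  unfold corr, corr_next. split.
  - eapply Rle_trans; [apply B1|]. apply Rmult_le_compat_r; auto.
  - eapply Rle_trans; [apply B2|]. apply Rmult_le_compat_r; auto.
Qed.

Lemma corr_at_T Z i j : inner_node M N i j ->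
  corr Z T (M - 1 - i) 0 j = fst Z i j - u T i j /\
  corr Z T (M - 1 - i) 1%nat j = snd Z i j - du T i j.
Proof.
  intros Hin. unfold inner_node in Hin.
  assert (HD : forall n o, (o <= 1)%nat -> (n <= M - 2)%nat -> corr Z T n o j = target_jet Z n o j).
  { intros n o Ho Hn. unfold corr.
    rewrite (proj1 (sweep_local h N (seed Z T) (jet_solve h N (target_jet Z) njets) (2 * M - 3)
      ltac:(intros k j' Hk; apply jet_interp_at_end; [unfold t_on; lra|unfold njets; lia])
      n o j ltac:(lia))).
    apply sweep_jet_solve; auto. unfold njets; lia. }
  rewrite !HD by lia. unfold target_jet.
  replace (Nat.leb (M - 1 - i) (M - 2)) with true by (symmetry; apply Nat.leb_le; lia).
  replace (row_in N j) with true by (symmetry; apply row_in_spec; lia). simpl.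
  replace (M - 1 - (M - 1 - i))%nat with i by lia. auto.
Qed.

Lemma ext_corr Z s k i j : inner_node M N i j ->
  ext M N (fun a b => corr Z s (M - 1 - a) k b) i j = corr Z s (M - 1 - i) k j.
Proof. intros; rewrite ext_inner by auto; reflexivity. Qed.

Lemma ext_corr_right Z s k i j : inner_node M N i j ->
  ext M N (fun a b => corr Z s (M - 1 - a) k b) (i + 1)%nat j = corr_next Z s (M - 1 - i) k j.
Proof.
  intros Hin. unfold inner_node in Hin. destruct (Nat.eq_dec i (M - 1)).
  - rewrite ext_outer by (unfold inner_node; lia). replace (M - 1 - i)%nat with 0%nat by lia.
    reflexivity.
  - rewrite ext_inner by (unfold inner_node; lia). unfold corr_next.
    replace (M - 1 - i)%nat with (S (M - 1 - (i + 1))) by lia. rewrite sweep_next_S. reflexivity.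
Qed.

Lemma ext_corr_left Z s k i j : inner_node M N i j -> (2 <= i)%nat ->
  ext M N (fun a b => corr Z s (M - 1 - a) k b) (i - 1)%nat j = corr Z s (S (M - 1 - i)) k j.
Proof.
  intros Hin Hi. unfold inner_node in Hin. rewrite ext_inner by (unfold inner_node; lia).
  f_equal. lia.
Qed.

Lemma ext_corr_row Z s k i j j' : inner_node M N i j ->
  ext M N (fun a b => corr Z s (M - 1 - a) k b) i j' =
  mask_rows N (sweep h N (seed Z s) (M - 1 - i)) k j'.
Proof.
  intros Hin. unfold inner_node in Hin. unfold mask_rows. destruct (row_in N j') eqn:E.
  - apply row_in_spec in E. rewrite ext_inner by (unfold inner_node; lia). reflexivity.
  - rewrite ext_outer; auto. intros [_ H]. apply (proj2 (row_in_spec N j')) in H. congruence.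
Qed.

Lemma ext_state Z t i j :
  ext M N (state Z t) i j =
  ext M N (u t) i j + ext M N (fun a b => corr Z t (M - 1 - a) 0 b) i j.
Proof. apply ext_plus. Qed.

Lemma ext_velocity Z t i j :
  ext M N (velocity Z t) i j =
  ext M N (du t) i j + ext M N (fun a b => corr Z t (M - 1 - a) 1 b) i j.
Proof. apply ext_plus. Qed.

Lemma is_derive_ext_state Z t i j : 0 <= t ->
  is_derive (fun s => ext M N (state Z s) i j) t (ext M N (velocity Z t) i j) /\
  continuous (fun s => ext M N (velocity Z s) i j) t.
Proof.
  intros Ht. destruct (is_derive_ext_ref t i j Ht) as [D1 C1].
  destruct (classic (inner_node M N i j)) as [Hin|Hout].
  - assert (Hn : (M - 1 - i <= M - 2)%nat) by (unfold inner_node in Hin; lia).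
    destruct (is_derive_corr Z (M - 1 - i) 0 j t ltac:(unfold order; lia)) as [D2 _].
    destruct (is_derive_corr Z (M - 1 - i) 1%nat j t ltac:(unfold order; lia)) as [D3 _].
    rewrite ext_velocity, ext_corr by auto. split.
    + eapply is_derive_eq; [apply (is_derive_plusR _ _ _ _ _ D1 D2)| |reflexivity].
      intros s. rewrite ext_state, ext_corr; auto.
    + apply (continuous_ext (fun s => ext M N (du s) i j + corr Z s (M - 1 - i) 1%nat j)).
      * intros s. rewrite ext_velocity, ext_corr; auto.
      * apply continuous_plusR; auto. apply (is_derive_continuous _ _ _ D3).
  - rewrite ext_outer by auto. split.
    + eapply is_derive_eq; [apply (is_derive_constR 0)| |reflexivity].
      intros s; rewrite ext_outer; auto.
    + apply (continuous_ext (fun _ => 0)); [intros s; rewrite ext_outer; auto|].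
      apply continuous_constR.
Qed.

Lemma ref_bounded : exists Bu, 0 <= Bu /\ forall s, t_lo <= s <= t_hi -> forall j,
  Rabs (ext M N (u s) 1%nat j) <= Bu /\ Rabs (ext M N (u s) 2%nat j) <= Bu /\
  Rabs (ext M N (du s) 1%nat j) <= Bu /\ Rabs (ext M N (du s) 2%nat j) <= Bu.
Proof.
  set (f := fun j s => Rabs (ext M N (u s) 1%nat j) + Rabs (ext M N (u s) 2%nat j) +
     Rabs (ext M N (du s) 1%nat j) + Rabs (ext M N (du s) 2%nat j)).
  destruct (bounded_uniform_fin f (fun s => t_lo <= s <= t_hi) N) as [B [HB HBf]].
  { intros j Hj. apply bounded_on_segment; [unfold t_lo, t_hi; lra|].
    intros c Hc. apply continuity_pt_filterlim.
    assert (Hc0 : 0 <= c) by (unfold t_lo in Hc; lra).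
    destruct (is_derive_ext_ref c 1%nat j Hc0) as [D1 C1].
    destruct (is_derive_ext_ref c 2%nat j Hc0) as [D2 C2].
    change (continuous (f j) c). unfold f.
    repeat apply continuous_plusR; apply (continuous_Rabs_comp (fun s => ext M N _ _ _));
      auto; eapply is_derive_continuous; eauto. }
  exists B. split; auto. intros s Hs j.
  destruct (Compare_dec.le_lt_dec N j) as [Hj|Hj].
  - rewrite !ext_outer by (unfold inner_node; lia). rewrite Rabs_R0. repeat split; auto.
  - specialize (HBf j Hj s Hs). unfold f in HBf; cbv beta in HBf.
    pose proof (Rabs_pos (ext M N (u s) 1%nat j)). pose proof (Rabs_pos (ext M N (u s) 2%nat j)).
    pose proof (Rabs_pos (ext M N (du s) 1%nat j)). pose proof (Rabs_pos (ext M N (du s) 2%nat j)).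
    rewrite Rabs_right in HBf by lra. repeat split; lra.
Qed.

Lemma nondegeneracy_margin : exists m, 0 < m /\ forall j, (1 <= j <= N - 1)%nat ->
  forall s, t_lo <= s <= t_hi ->
  m <= Rabs (/ 2 * ext M N (u s) 2%nat j - 2 * ext M N (u s) 1%nat j).
Proof.
  set (g := fun j s => Rabs (/ 2 * ext M N (u s) 2%nat j - 2 * ext M N (u s) 1%nat j)).
  destruct (positive_lower_bound_fin g (fun j => (1 <= j <= N - 1)%nat)
     (fun s => t_lo <= s <= t_hi) N) as [m [Hm H]].
  - intros j Hj Pj.
    destruct (continuity_ab_min (g j) t_lo t_hi) as [mx [Hmx Hr]]; [unfold t_lo, t_hi; lra| |].
    + intros c Hc. apply continuity_pt_filterlim.
      assert (Hc0 : 0 <= c) by (unfold t_lo in Hc; lra).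
      destruct (is_derive_ext_ref c 1%nat j Hc0) as [D1 _].
      destruct (is_derive_ext_ref c 2%nat j Hc0) as [D2 _].
      apply (continuous_Rabs_comp (fun s => _ - _)).
      apply continuous_minusR; apply continuous_multR; try apply continuous_constR;
        eapply is_derive_continuous; eauto.
    + exists (g j mx). split; [|intros t Ht; apply Hmx; auto].
      apply Rabs_pos_lt, Hnd; auto. unfold t_lo in Hr; lra.
  - exists m. split; auto. intros j Hj s Hs. apply (H j); auto. lia.
Qed.

Definition rho Z j s := corr Z s (M - 1) 0 j.
Definition drho Z j s := corr Z s (M - 1) 1 j.
Definition a1 Z j s := ext M N (state Z s) 1%nat j.
Definition da1 Z j s := ext M N (velocity Z s) 1%nat j.
Definition a2 Z j s := ext M N (state Z s) 2%nat j.
Definition da2 Z j s := ext M N (velocity Z s) 2%nat j.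

Lemma rho_before Z j s : s <= t_on -> rho Z j s = 0 /\ drho Z j s = 0.
Proof. intros Hs. split; apply corr_before; auto. Qed.

Lemma is_derive_rho Z j s : is_derive (rho Z j) s (drho Z j s) /\ continuous (drho Z j) s.
Proof.
  split; [apply (is_derive_corr Z (M - 1) 0 j s); unfold order; lia|].
  apply (is_derive_continuous _ _ (corr Z s (M - 1) 2 j)).
  apply (is_derive_corr Z (M - 1) 1 j s). unfold order; lia.
Qed.

Lemma is_derive_a Z j s : t_lo < s ->
  is_derive (a1 Z j) s (da1 Z j s) /\ is_derive (a2 Z j) s (da2 Z j s) /\
  continuous (da1 Z j) s /\ continuous (da2 Z j) s.
Proof.
  intros Hs. assert (H0 : 0 <= s) by (unfold t_lo in Hs; lra).
  destruct (is_derive_ext_state Z s 1%nat j H0), (is_derive_ext_state Z s 2%nat j H0). tauto.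
Qed.

Lemma boundary_state_decomp Z j s : (1 <= j <= N - 1)%nat ->
  a1 Z j s = ext M N (u s) 1%nat j + corr Z s (M - 2) 0 j /\
  da1 Z j s = ext M N (du s) 1%nat j + corr Z s (M - 2) 1 j /\
  a2 Z j s = ext M N (u s) 2%nat j + corr_next Z s (M - 2) 0 j /\
  da2 Z j s = ext M N (du s) 2%nat j + corr_next Z s (M - 2) 1 j.
Proof.
  intros Hj. assert (Hin : inner_node M N 1 j) by (unfold inner_node; lia).
  unfold a1, da1, a2, da2. rewrite ext_state, ext_velocity, ext_state, ext_velocity.
  pose proof (ext_corr_right Z s 0 1 j Hin) as E0. pose proof (ext_corr_right Z s 1 1 j Hin) as E1.
  simpl (1 + 1)%nat in E0, E1. rewrite !ext_corr, E0, E1 by auto.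
  replace (M - 1 - 1)%nat with (M - 2)%nat by lia. repeat split.
Qed.

(* Near the target the column-0 value [rho] and the correction are small, so the linear
   coefficient of [bnd_quad] stays close to [2 (u_2/2 - 2 u_1)], which the non-degeneracy
   condition keeps away from 0. *)
Lemma boundary_coeff_bounds Z m Bu eps :
  (forall j, (1 <= j <= N - 1)%nat -> forall s, t_lo <= s <= t_hi ->
     m <= Rabs (/ 2 * ext M N (u s) 2%nat j - 2 * ext M N (u s) 1%nat j)) ->
  (forall s, t_lo <= s <= t_hi -> forall j,
     Rabs (ext M N (u s) 1%nat j) <= Bu /\ Rabs (ext M N (u s) 2%nat j) <= Bu /\
     Rabs (ext M N (du s) 1%nat j) <= Bu /\ Rabs (ext M N (du s) 2%nat j) <= Bu) ->
  eps <= 1 -> eps <= m / 16 ->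
  (forall s, t_lo <= s <= t_hi -> forall n k j, (n <= M - 1)%nat -> (k + 2 * n <= order - 1)%nat ->
     Rabs (corr Z s n k j) <= eps /\ Rabs (corr_next Z s n k j) <= eps) ->
  forall j, (1 <= j <= N - 1)%nat -> forall s, t_lo <= s <= t_hi ->
    m <= Rabs (a2 Z j s - 4 * a1 Z j s + 3 * rho Z j s) /\
    Rabs (a2 Z j s - 2 * a1 Z j s + rho Z j s) <= 3 * Bu + 4 /\
    Rabs (rho Z j s) <= eps /\ Rabs (drho Z j s) <= eps /\
    Rabs (da1 Z j s) <= 3 * Bu + 4 /\ Rabs (da2 Z j s) <= 3 * Bu + 4.
Proof.
  intros Hmb HB He1 Hem Hcorr j Hj s Hs.
  destruct (boundary_state_decomp Z j s Hj) as [-> [-> [-> ->]]]. unfold rho, drho.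
  destruct (Hcorr s Hs (M - 2)%nat 0%nat j ltac:(lia) ltac:(unfold order; lia)) as [B1 B2].
  destruct (Hcorr s Hs (M - 2)%nat 1%nat j ltac:(lia) ltac:(unfold order; lia)) as [B3 B4].
  destruct (Hcorr s Hs (M - 1)%nat 0%nat j ltac:(lia) ltac:(unfold order; lia)) as [B5 _].
  destruct (Hcorr s Hs (M - 1)%nat 1%nat j ltac:(lia) ltac:(unfold order; lia)) as [B6 _].
  destruct (HB s Hs j) as [U1 [U2 [U3 U4]]].
  pose proof (Hmb j Hj s Hs) as Mb.
  apply Rabs_le_inv in B1, B2, B3, B4, B5, B6, U1, U2, U3, U4.
  set (x1 := ext M N (u s) 1%nat j) in *. set (x2 := ext M N (u s) 2%nat j) in *.
  set (c1 := corr Z s (M - 2) 0 j) in *. set (c2 := corr_next Z s (M - 2) 0 j) in *.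
  set (r := corr Z s (M - 1) 0 j) in *.
  repeat split; try (apply Rabs_le; lra).
  replace (x2 + c2 - 4 * (x1 + c1) + 3 * r) with (2 * (/ 2 * x2 - 2 * x1) + (c2 - 4 * c1 + 3 * r))
    by field.
  pose proof (Rabs_triang_inv (2 * (/ 2 * x2 - 2 * x1)) (- (c2 - 4 * c1 + 3 * r))) as Htri.
  rewrite Rabs_Ropp in Htri.
  replace (2 * (/ 2 * x2 - 2 * x1) - - (c2 - 4 * c1 + 3 * r))
    with (2 * (/ 2 * x2 - 2 * x1) + (c2 - 4 * c1 + 3 * r)) in Htri by ring.
  rewrite Rabs_mult, (Rabs_right 2) in Htri by lra.
  assert (Rabs (c2 - 4 * c1 + 3 * r) <= 8 * eps) by (apply Rabs_le; lra). lra.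
Qed.

Section Perturbation.
Variables (Z : grid * grid) (m G eps : R).
Hypothesis Hm : 0 < m.
Hypothesis HG : 0 <= G.
Hypothesis Heps : 0 <= eps /\ eps <= m / 16 /\ 8 * eps * G <= m ^ 2 / 2 /\
  2 * eps * (3 * m + 28 * G) <= m ^ 2 / 2.
Hypothesis Hb : forall j, (1 <= j <= N - 1)%nat -> forall s, t_lo <= s <= t_hi ->
  m <= Rabs (a2 Z j s - 4 * a1 Z j s + 3 * rho Z j s) /\
  Rabs (a2 Z j s - 2 * a1 Z j s + rho Z j s) <= G /\
  Rabs (rho Z j s) <= eps /\ Rabs (drho Z j s) <= eps /\
  Rabs (da1 Z j s) <= G /\ Rabs (da2 Z j s) <= G.

Definition lam_bnd j := lam_root (rho Z j) (a1 Z j) (a2 Z j).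
Definition dlam_bnd j := lam_root_deriv (rho Z j) (drho Z j) (a1 Z j) (da1 Z j) (a2 Z j) (da2 Z j).
Definition lam t j := lam_bnd j (squash T t).

Lemma lam_bnd_props j : (1 <= j <= N - 1)%nat -> forall s, s < t_hi ->
  Rabs (lam_bnd j s) <= 1 / 4 /\ Rabs (dlam_bnd j s) <= 1 / 2 /\
  bnd_quad (lam_bnd j s) (rho Z j s) (a1 Z j s) (a2 Z j s) = 0 /\
  is_derive (lam_bnd j) s (dlam_bnd j s) /\ continuous (dlam_bnd j) s.
Proof.
  intros Hj s Hs.
  assert (Ht : 0 < t_lo < t_on /\ t_on < t_hi) by (unfold t_lo, t_on, t_hi; lra).
  pose proof (rho_before Z j) as H0. pose proof (is_derive_rho Z j) as H1.
  pose proof (is_derive_a Z j) as H2. pose proof (Hb j Hj) as H3.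
  destruct (lam_root_props _ _ _ _ _ _ _ _ _ _ _ _ Ht Hm HG Heps H0 H3 s Hs) as [L1 [L2 L3]].
  destruct (is_derive_lam_root _ _ _ _ _ _ _ _ _ _ _ _ Ht Hm Heps H0 H1 H2 H3 s Hs).
  tauto.
Qed.

Lemma lam_admissible : admissible N lam.
Proof.
  split.
  - exists (1 / 4). split; [lra|]. intros j Hj t Ht0. unfold lam.
    destruct (squash_range T t ltac:(lra) Ht0).
    apply (lam_bnd_props j Hj (squash T t) ltac:(unfold t_hi; lra)).
  - intros j Hj. exists (fun t => dlam_bnd j (squash T t) * squash_deriv T t).
    split; [|split].
    + intros t Ht0. destruct (squash_range T t ltac:(lra) Ht0).
      destruct (lam_bnd_props j Hj (squash T t) ltac:(unfold t_hi; lra)) as [_ [_ [_ [D _]]]].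
      eapply is_derive_eq;
        [apply (is_derive_comp (lam_bnd j) (squash T)); [apply D|apply is_derive_squash]|
         reflexivity|].
      simpl. unfold scal; simpl. unfold mult; simpl. apply Rmult_comm.
    + apply continuous_on_forall. intros t Ht0. destruct (squash_range T t ltac:(lra) Ht0).
      destruct (lam_bnd_props j Hj (squash T t) ltac:(unfold t_hi; lra)) as [_ [_ [_ [_ C]]]].
      apply continuous_multR; [|apply continuous_squash_deriv].
      apply (continuous_comp (squash T)); auto.
      apply (is_derive_continuous _ _ _ (is_derive_squash T t)).
    + exists (1 / 2). split; [lra|]. intros t Ht0. destruct (squash_range T t ltac:(lra) Ht0).
      destruct (lam_bnd_props j Hj (squash T t) ltac:(unfold t_hi; lra)) as [_ [L2 _]].
      destruct (squash_deriv_bound T t).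
      rewrite Rabs_mult, (Rabs_right (squash_deriv T t)) by lra.
      pose proof (Rabs_pos (dlam_bnd j (squash T t))). nra.
Qed.

Lemma state_solves : solves_on (fun t => 0 <= t <= T) M N h F lam u0 u1 (state Z) (velocity Z).
Proof.
  intros i j Hin. destruct (Hu i j Hin) as [Hu0 [Hu1 _]].
  assert (Hn : (M - 1 - i <= M - 2)%nat) by (unfold inner_node in Hin; lia).
  split; [|split].
  - unfold state. rewrite (proj1 (corr_before Z 0 _ 0 j ltac:(unfold t_on; lra)) ), Hu0. ring.
  - unfold velocity. rewrite (proj1 (corr_before Z 0 _ 1 j ltac:(unfold t_on; lra))), Hu1. ring.
  - intros t [Ht0 HtT]. destruct (ref_derive t i j Ht0 Hin) as [D1 [au [D2 HF]]].
    exists (au + corr Z t (M - 1 - i) 2 j). split; [|split].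
    + apply is_derive_plusR; [apply D1|].
      apply (is_derive_corr Z (M - 1 - i) 0 j t). unfold order; lia.
    + apply is_derive_plusR; [apply D2|].
      apply (is_derive_corr Z (M - 1 - i) 1 j t). unfold order; lia.
    + unfold Aop in HF |- *. destruct (Nat.eqb i 1) eqn:Ei.
      * apply Nat.eqb_eq in Ei. subst i.
        assert (Hj : (1 <= j <= N - 1)%nat) by (unfold inner_node in Hin; lia).
        destruct (lam_bnd_props j Hj t ltac:(unfold t_hi; lra)) as [L1 [_ [L3 _]]].
        unfold lam. rewrite squash_id by auto.
        pose proof (ext_corr_right Z t 0 1 j Hin) as E2. simpl (1 + 1)%nat in E2.
        rewrite !ext_state, E2, ext_corr, !(ext_corr_row Z t 0 1 j) by auto.
        destruct (boundary_state_decomp Z j t Hj) as [Ea1 [_ [Ea2 _]]]. rewrite Ea1, Ea2 in L3.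
        replace (M - 1 - 1)%nat with (M - 2)%nat in * by lia.
        apply (first_column_eq h (lam_bnd j t) (rho Z j t)); auto.
        unfold rho, corr, corr_next. replace (M - 1)%nat with (S (M - 2)) by lia.
        rewrite sweep_S. reflexivity.
      * apply Nat.eqb_neq in Ei.
        assert (Hi2 : (2 <= i)%nat) by (unfold inner_node in Hin; lia).
        rewrite !ext_state, ext_corr, ext_corr_right, ext_corr_left, !(ext_corr_row Z t 0 i j)
          by auto.
        eapply interior_column_eq; eauto.
Qed.

End Perturbation.

Lemma state_at_T Z i j : inner_node M N i j ->
  state Z T i j = fst Z i j /\ velocity Z T i j = snd Z i j.
Proof.
  intros Hin. destruct (corr_at_T Z i j Hin) as [E1 E2].
  unfold state, velocity. rewrite E1, E2. split; ring.
Qed.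

Lemma local_exact_control : exists (V0 : (R -> nat -> R) -> Prop) (VZ : grid * grid -> Prop),
  nbhd0 N T V0 /\ nbhdZ M N (u T, du T) VZ /\
  forall Z, VZ Z ->
    exists (lam : R -> nat -> R) (w dw : R -> grid),
      admissible N lam /\ V0 (fun t j => h * lam t j) /\
      solves_on (fun t => 0 <= t <= T) M N h F lam u0 u1 w dw /\
      forall i j, inner_node M N i j -> w T i j = fst Z i j /\ dw T i j = snd Z i j.
Proof.
  destruct corr_bound as [Ce [HCe Hcorr]].
  destruct ref_bounded as [Bu [HBu HB]].
  destruct nondegeneracy_margin as [m [Hm Hmb]].
  set (G := 3 * Bu + 4). assert (HG : 0 <= G) by (unfold G; lra).
  destruct (small_eps_exists m G Hm HG) as [e0 [He0 Heps]].
  set (e := Rmin 1 e0). assert (He : 0 < e) by (apply Rmin_pos; lra).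
  set (zeta := e / (Ce + 1)). assert (Hz : 0 < zeta) by (apply Rdiv_lt_0_compat; lra).
  set (eps := Ce * zeta).
  assert (Heps_e : 0 <= eps <= e).
  { unfold eps. split; [apply Rmult_le_pos; lra|].
    apply Rle_trans with ((Ce + 1) * zeta); [apply Rmult_le_compat_r; lra|].
    right. unfold zeta. field. lra. }
  assert (He1 : e <= 1) by apply Rmin_l. assert (He2 : e <= e0) by apply Rmin_r.
  destruct (Heps eps ltac:(lra)) as [E1 [E2 E3]].
  (* The whole space is a neighbourhood of 0: the size of the perturbation is already
     controlled by admissibility. *)
  exists (fun _ => True), (fun Z => near_target Z zeta).
  split; [exists 1; split; [lra|auto]|].
  split.
  { exists zeta. split; auto. intros Z HZ i j Hin. destruct (HZ i j Hin) as [H1 H2].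
    cbn [fst snd] in H1, H2. split; lra. }
  intros Z HZ.
  assert (Hb := boundary_coeff_bounds Z m Bu eps Hmb HB ltac:(lra) E1
    (fun s Hs => Hcorr Z zeta (Rlt_le _ _ Hz) HZ s Hs)).
  assert (Hepsc : 0 <= eps /\ eps <= m / 16 /\ 8 * eps * G <= m ^ 2 / 2 /\
    2 * eps * (3 * m + 28 * G) <= m ^ 2 / 2) by (repeat split; lra).
  exists (lam Z), (state Z), (velocity Z).
  split; [exact (lam_admissible Z m G eps Hm HG Hepsc Hb)|].
  split; [exact I|].
  split; [exact (state_solves Z m G eps Hm HG Hepsc Hb)|].
  apply state_at_T.
Qed.

End Control.

Theorem theorem2p31 :
  forall (M N : nat) (h T : R) (F : R -> grid) (u0 u1 : grid) (u du : R -> grid),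
    (2 <= M)%nat -> (2 <= N)%nat -> 0 < h -> 0 < T ->
    (forall i j, inner_node M N i j -> continuous_on (fun t => 0 <= t) (fun t => F t i j)) ->
    solves_on (fun t => 0 <= t) M N h F (fun _ _ => 0) u0 u1 u du ->
    (forall t, 0 < t -> forall j, (1 <= j <= N - 1)%nat ->
       / 2 * ext M N (u t) 2%nat j - 2 * ext M N (u t) 1%nat j <> 0) ->
    exists (V0 : (R -> nat -> R) -> Prop) (VZ : grid * grid -> Prop),
      nbhd0 N T V0 /\ nbhdZ M N (u T, du T) VZ /\
      forall Z, VZ Z ->
        exists (lam : R -> nat -> R) (w dw : R -> grid),
          admissible N lam /\
          V0 (fun t j => h * lam t j) /\
          solves_on (fun t => 0 <= t <= T) M N h F lam u0 u1 w dw /\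
          forall i j, inner_node M N i j -> w T i j = fst Z i j /\ dw T i j = snd Z i j.
Proof.
  (* The reference state is given. *)
  intros M N h T F u0 u1 u du HM HN Hh HT _ Hu Hnd.
  exact (local_exact_control M N h T F u0 u1 u du HM HN Hh HT Hu Hnd).
Qed.
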